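(* For every fixed $\varepsilon>0$ there is an algorithm with running time $O\big(\big(\frac{1+\varepsilon}{\varepsilon}\big)^k n^{k+1}\big)$ that, given any instance of the Maximum Generalized Assignment Problem with $k$ bins and $n$ items, returns an assignment of a subset of the items to the bins such that for every bin $j$ the total size $\sum s_{ij}$ of the items assigned to bin $j$ is at most $(1+\varepsilon)C_j$, and whose total profit is at least the optimum profit of the instance (with the original capacities $C_j$).
   Context: Maximum Generalized Assignment Problem (GAP): there are $k$ bins with positive integer capacities $C_1,\dots,C_k$ and $n$ items; assigning item $i$ to bin $j$ uses size $s_{ij}$ (a nonnegative integer) and gives profit $p_{ij}$ (a nonnegative integer). A feasible solution assigns a subset of the items, each to exactly one bin, so that for every bin $j$ the total size of the items assigned to $j$ is at most $C_j$; the goal is to maximize the total profit. *)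

From Stdlib Require Import Reals Arith Lia List.
Open Scope R_scope.

(* An instance: k bins, n items, capacity C j (j < k), size s i j and profit
   p i j of item i (i < n) in bin j.  Only indices below the bounds matter. *)
Record gap_instance := GapInstance {
  gk : nat;
  gn : nat;
  gC : nat -> nat;
  gs : nat -> nat -> nat;
  gp : nat -> nat -> nat
}.

Definition valid_instance (I : gap_instance) : Prop :=
  (1 <= gk I)%nat /\ (1 <= gn I)%nat /\ forall j, (j < gk I)%nat -> (1 <= gC I j)%nat.

(* an assignment: a i = Some j means item i goes to bin j; None = unassigned *)
Definition assignment := nat -> option nat.

Fixpoint sum_below (f : nat -> nat) (m : nat) : nat :=
  match m with O => O | S m' => (sum_below f m' + f m')%nat end.

Definition in_bin (a : assignment) (i j : nat) : bool :=
  match a i with Some j' => Nat.eqb j' j | None => false end.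

Definition bin_load (I : gap_instance) (a : assignment) (j : nat) : nat :=
  sum_below (fun i => if in_bin a i j then gs I i j else O) (gn I).

Definition profit (I : gap_instance) (a : assignment) : nat :=
  sum_below (fun i => match a i with Some j => gp I i j | None => O end) (gn I).

Definition bins_ok (I : gap_instance) (a : assignment) : Prop :=
  forall i j, (i < gn I)%nat -> a i = Some j -> (j < gk I)%nat.

Definition feasible (I : gap_instance) (a : assignment) : Prop :=
  bins_ok I a /\ forall j, (j < gk I)%nat -> (bin_load I a j <= gC I j)%nat.

Definition feasible_relaxed (eps : R) (I : gap_instance) (a : assignment) : Prop :=
  bins_ok I a /\
  forall j, (j < gk I)%nat -> INR (bin_load I a j) <= (1 + eps) * INR (gC I j).

Definition memory := nat -> nat.

Definition upd (m : memory) (a v : nat) : memory :=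
  fun x => if Nat.eqb x a then v else m x.

Inductive instr :=
| IConst (r c : nat)
| IAdd (r x y : nat)
| ISub (r x y : nat)          (* M[r] := M[x] - M[y] (truncated) *)
| IMul (r x y : nat)
| IDiv (r x y : nat)          (* M[r] := M[x] / M[y] (floor; 0 if M[y] = 0) *)
| ILoad (r x : nat)
| IStore (x r : nat)
| IJz (r l : nat)
| IHalt.

Definition program := list instr.
Definition config := (nat * memory)%type.

Definition step (P : program) (c : config) : option config :=
  let (pc, m) := c in
  match nth_error P pc with
  | None => None
  | Some IHalt => None
  | Some (IConst r v) => Some (S pc, upd m r v)
  | Some (IAdd r x y) => Some (S pc, upd m r (m x + m y)%nat)
  | Some (ISub r x y) => Some (S pc, upd m r (m x - m y)%nat)
  | Some (IMul r x y) => Some (S pc, upd m r (m x * m y)%nat)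
  | Some (IDiv r x y) => Some (S pc, upd m r (Nat.div (m x) (m y)))
  | Some (ILoad r x) => Some (S pc, upd m r (m (m x)))
  | Some (IStore x r) => Some (S pc, upd m (m x) (m r))
  | Some (IJz r l) => Some (if Nat.eqb (m r) 0 then l else S pc, m)
  end.

Definition halted (P : program) (c : config) : Prop := step P c = None.

Fixpoint run (P : program) (t : nat) (c : config) : config :=
  match t with
  | O => c
  | S t' => match step P c with None => c | Some c' => run P t' c' end
  end.

(* Input encoding: M[0]=k, M[1]=n, M[2+j]=C_j (j<k),
   M[2+k+i*k+j]=s_{ij}, M[2+k+n*k+i*k+j]=p_{ij}, all other cells 0. *)
Definition init_memory (I : gap_instance) : memory :=
  fun x =>
    let k := gk I in let n := gn I in
    if Nat.eqb x 0 then k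
    else if Nat.eqb x 1 then n
    else if Nat.ltb x (2 + k) then gC I (x - 2)
    else if Nat.ltb x (2 + k + n * k) then
      gs I ((x - 2 - k) / k) ((x - 2 - k) mod k)
    else if Nat.ltb x (2 + k + 2 * n * k) then
      gp I ((x - 2 - k - n * k) / k) ((x - 2 - k - n * k) mod k)
    else 0%nat.

(* Output encoding: on halting, cell 2+k+2nk+i holds 0 if item i is
   unassigned, and j+1 if item i is assigned to bin j. *)
Definition output_base (I : gap_instance) : nat := (2 + gk I + 2 * gn I * gk I)%nat.

Definition decode (I : gap_instance) (m : memory) : assignment :=
  fun i => match m (output_base I + i)%nat with
           | O => None
           | S j => Some j
           end.

From Stdlib Require Import Reals.
Open Scope R_scope.
From Stdlib Require Import Arith Lia List Bool Lra ZArith.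
Import ListNotations.

(* Fix an integer Nc with 2/eps < Nc <= 2/eps + 1 and let L = floor((n-1) Nc / 2).
   Measuring bin j in units of (Nc + 2) C_j / ((L + n) Nc) and rounding every
   size down to whole units, a feasible solution has rounded load at most L in
   every bin, while any assignment with rounded loads at most L really puts less
   than L + n units, i.e. at most (1 + 2/Nc) C_j <= (1 + eps) C_j, into bin j,
   since each item loses less than one unit.  A dynamic program over the
   (L + 1)^k vectors of rounded loads finds the most profitable such
   assignment, which therefore beats the optimum.

   The dynamic program is written in a small structured language compiled to
   the RAM, whose big-step semantics counts machine steps; it runs in
   O(n k (L + 1)^k) steps.  As L + 1 <= n rho with rho = max(Nc, 2)/2 < (1 + eps)/eps,
   this is at most n^(k+1) ((1 + eps)/eps)^k k q^k with q < 1, and k q^k is bounded. *)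

Local Open Scope nat_scope.

(** * Structured programs for the RAM *)

Inductive atom :=
| AConst (r c : nat) | AAdd (r x y : nat) | ASub (r x y : nat)
| AMul (r x y : nat) | ADiv (r x y : nat) | ALoad (r x : nat) | AStore (x r : nat).

Definition atom_instr (a : atom) : instr :=
  match a with
  | AConst r c => IConst r c | AAdd r x y => IAdd r x y | ASub r x y => ISub r x y
  | AMul r x y => IMul r x y | ADiv r x y => IDiv r x y | ALoad r x => ILoad r x
  | AStore x r => IStore x r
  end.

Definition atom_effect (a : atom) (m : memory) : memory :=
  match a with
  | AConst r c => upd m r c
  | AAdd r x y => upd m r (m x + m y)
  | ASub r x y => upd m r (m x - m y)
  | AMul r x y => upd m r (m x * m y)
  | ADiv r x y => upd m r (Nat.div (m x) (m y))
  | ALoad r x => upd m r (m (m x))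
  | AStore x r => upd m (m x) (m r)
  end.

(* Branches and loops are compiled with jumps on zero only; an unconditional
   jump is [IConst jump_reg 0; IJz jump_reg l], which clobbers cell 2. *)
Inductive cmd :=
| CA (a : atom)
| CSeq (c1 c2 : cmd)
| CIf (r : nat) (c1 c2 : cmd)   (* c1 if M[r] = 0, else c2 *)
| CWhile (r : nat) (c : cmd).   (* while M[r] <> 0 do c *)

Notation jump_reg := 2 (only parsing).

Fixpoint cmd_size (c : cmd) : nat :=
  match c with
  | CA _ => 1
  | CSeq c1 c2 => cmd_size c1 + cmd_size c2
  | CIf _ c1 c2 => cmd_size c1 + cmd_size c2 + 3
  | CWhile _ c => cmd_size c + 3
  end.

Fixpoint compile (c : cmd) (o : nat) : list instr :=
  match c with
  | CA a => [atom_instr a]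
  | CSeq c1 c2 => compile c1 o ++ compile c2 (o + cmd_size c1)
  | CIf r c1 c2 =>
      IJz r (o + 3 + cmd_size c2) :: compile c2 (S o) ++
      [IConst jump_reg 0; IJz jump_reg (o + 3 + cmd_size c2 + cmd_size c1)] ++
      compile c1 (o + 3 + cmd_size c2)
  | CWhile r c =>
      IJz r (o + 3 + cmd_size c) :: compile c (S o) ++ [IConst jump_reg 0; IJz jump_reg o]
  end.

(* Big-step semantics with the exact number of machine steps. *)
Inductive exec : cmd -> memory -> memory -> nat -> Prop :=
| exec_atom a m : exec (CA a) m (atom_effect a m) 1
| exec_seq c1 c2 m m1 m2 t1 t2 :
    exec c1 m m1 t1 -> exec c2 m1 m2 t2 -> exec (CSeq c1 c2) m m2 (t1 + t2)
| exec_if0 r c1 c2 m m' t :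
    m r = 0 -> exec c1 m m' t -> exec (CIf r c1 c2) m m' (S t)
| exec_if1 r c1 c2 m m' t :
    m r <> 0 -> exec c2 m m' t -> exec (CIf r c1 c2) m (upd m' jump_reg 0) (t + 3)
| exec_while0 r c m : m r = 0 -> exec (CWhile r c) m m 1
| exec_while1 r c m m1 m2 t1 t2 :
    m r <> 0 -> exec c m m1 t1 -> exec (CWhile r c) (upd m1 jump_reg 0) m2 t2 ->
    exec (CWhile r c) m m2 (t1 + 3 + t2).

Lemma length_compile c o : length (compile c o) = cmd_size c.
Proof.
  revert o; induction c; intros o; simpl; auto;
    repeat (rewrite ?length_app; simpl); rewrite ?IHc1, ?IHc2, ?IHc; lia.
Qed.

Lemma run_add P a b c : run P (a + b) c = run P b (run P a c).
Proof.
  revert c; induction a as [|a IHa]; intros c; simpl; auto.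
  destruct (step P c) eqn:E; auto.
  clear IHa. revert c E; induction b; intros c E; simpl; auto. now rewrite E.
Qed.

Lemma run_step P t c c' : step P c = Some c' -> run P (S t) c = run P t c'.
Proof. intros H; simpl; now rewrite H. Qed.

Definition embedded (P : program) (o : nat) (l : list instr) :=
  forall i x, nth_error l i = Some x -> nth_error P (o + i) = Some x.

Lemma embedded_app_l P o l1 l2 : embedded P o (l1 ++ l2) -> embedded P o l1.
Proof.
  intros H i x Hx. apply H. rewrite nth_error_app1; auto.
  apply nth_error_Some; congruence.
Qed.

Lemma embedded_app_r P o l1 l2 : embedded P o (l1 ++ l2) -> embedded P (o + length l1) l2.
Proof.
  intros H i x Hx. rewrite <- Nat.add_assoc. apply H.
  rewrite nth_error_app2 by lia. now replace (length l1 + i - length l1) with i by lia.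
Qed.

Lemma embedded_head P o x l : embedded P o (x :: l) -> nth_error P o = Some x.
Proof. intros H. specialize (H 0 x). rewrite Nat.add_0_r in H. auto. Qed.

Lemma embedded_tail P o x l : embedded P o (x :: l) -> embedded P (S o) l.
Proof. intros H i y Hy. replace (S o + i) with (o + S i) by lia. now apply H. Qed.

Lemma embedded_shift P o o' l : embedded P o l -> o = o' -> embedded P o' l.
Proof. now intros H ->. Qed.

Lemma step_atom P pc m a :
  nth_error P pc = Some (atom_instr a) -> step P (pc, m) = Some (S pc, atom_effect a m).
Proof. intros H. unfold step. rewrite H. now destruct a. Qed.

Lemma run_jump P pc l m :
  nth_error P pc = Some (IConst jump_reg 0) -> nth_error P (S pc) = Some (IJz jump_reg l) ->
  run P 2 (pc, m) = (l, upd m jump_reg 0).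
Proof.
  intros H1 H2.
  rewrite (run_step _ _ _ (S pc, upd m jump_reg 0)) by (unfold step; now rewrite H1).
  rewrite (run_step _ _ _ (l, upd m jump_reg 0)); [reflexivity|].
  unfold step. now rewrite H2.
Qed.

Lemma compile_correct c m m' t : exec c m m' t ->
  forall P o, embedded P o (compile c o) -> run P t (o, m) = (o + cmd_size c, m').
Proof.
  induction 1; intros P o HE; simpl in HE.
  - cbn [run]. rewrite (step_atom _ _ _ _ (embedded_head _ _ _ _ HE)). simpl. f_equal; lia.
  - rewrite run_add, (IHexec1 P o (embedded_app_l _ _ _ _ HE)).
    pose proof (embedded_app_r _ _ _ _ HE) as H2. rewrite length_compile in H2.
    rewrite (IHexec2 P _ H2). simpl. f_equal; lia.
  - simpl. unfold step. rewrite (embedded_head _ _ _ _ HE), H. simpl.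
    pose proof (embedded_app_r _ _ _ _ (embedded_tail _ _ _ _ HE)) as H3.
    rewrite length_compile in H3.
    pose proof (embedded_tail _ _ _ _ (embedded_tail _ _ _ _ H3)) as H4.
    erewrite IHexec; [f_equal; simpl; lia|].
    eapply embedded_shift; [exact H4|lia].
  - replace (t + 3) with (S (t + 2)) by lia. simpl. unfold step.
    rewrite (embedded_head _ _ _ _ HE).
    destruct (Nat.eqb_spec (m r) 0); [contradiction|].
    pose proof (embedded_tail _ _ _ _ HE) as H2.
    rewrite run_add. erewrite IHexec by (eapply embedded_shift; [exact (embedded_app_l _ _ _ _ H2)|lia]).
    pose proof (embedded_app_r _ _ _ _ H2) as H4. rewrite length_compile in H4.
    rewrite (run_jump _ _ _ _ (embedded_head _ _ _ _ H4)
               (embedded_head _ _ _ _ (embedded_tail _ _ _ _ H4))).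
    f_equal. lia.
  - simpl. unfold step. rewrite (embedded_head _ _ _ _ HE), H. simpl. f_equal; lia.
  - rewrite run_add. replace (t1 + 3) with (S (t1 + 2)) by lia. simpl. unfold step.
    rewrite (embedded_head _ _ _ _ HE).
    destruct (Nat.eqb_spec (m r) 0); [contradiction|].
    pose proof (embedded_tail _ _ _ _ HE) as H2.
    rewrite run_add. erewrite IHexec1 by (eapply embedded_shift; [exact (embedded_app_l _ _ _ _ H2)|lia]).
    pose proof (embedded_app_r _ _ _ _ H2) as H4. rewrite length_compile in H4.
    rewrite (run_jump _ _ _ _ (embedded_head _ _ _ _ H4)
               (embedded_head _ _ _ _ (embedded_tail _ _ _ _ H4))).
    now apply IHexec2.
Qed.

Definition atom_target (a : atom) : list nat :=
  match a with
  | AConst r _ | AAdd r _ _ | ASub r _ _ | AMul r _ _ | ADiv r _ _ | ALoad r _ => [r]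
  | AStore _ _ => []
  end.

Definition atom_is_store (a : atom) : bool :=
  match a with AStore _ _ => true | _ => false end.

Fixpoint store_free (c : cmd) : bool :=
  match c with
  | CA a => negb (atom_is_store a)
  | CSeq c1 c2 | CIf _ c1 c2 => store_free c1 && store_free c2
  | CWhile _ c => store_free c
  end.

Fixpoint written (c : cmd) : list nat :=
  match c with
  | CA a => atom_target a
  | CSeq c1 c2 => written c1 ++ written c2
  | CIf _ c1 c2 => jump_reg :: written c1 ++ written c2
  | CWhile _ c => jump_reg :: written c
  end.

Lemma upd_same m a v x : a = x -> upd m a v x = v.
Proof. intros ->. unfold upd. now rewrite Nat.eqb_refl. Qed.

Lemma upd_other m a v x : a <> x -> upd m a v x = m x.
Proof. intros H. unfold upd. destruct (Nat.eqb_spec x a); congruence. Qed.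

Lemma exec_frame c m m' t : exec c m m' t -> store_free c = true ->
  forall x, ~ In x (written c) -> m' x = m x.
Proof.
  induction 1; simpl; intros Hn x Hx; rewrite ?andb_true_iff, ?in_app_iff in *.
  - destruct a; simpl in *; try discriminate; apply upd_other; intuition.
  - rewrite IHexec2, IHexec1; intuition.
  - apply IHexec; intuition.
  - rewrite upd_other by intuition. apply IHexec; intuition.
  - auto.
  - rewrite IHexec2 by auto. rewrite upd_other by intuition. apply IHexec1; intuition.
Qed.

Lemma while_rule r c (Inv : nat -> memory -> Prop) (bc : nat) :
  (forall v m, Inv v m -> (m r = 0 <-> v = 0)) ->
  (forall v m, Inv (S v) m ->
     exists m1 t1, exec c m m1 t1 /\ Inv v (upd m1 jump_reg 0) /\ t1 <= bc) ->
  forall v m, Inv v m ->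
    exists m' t, exec (CWhile r c) m m' t /\ Inv 0 m' /\ t <= 1 + v * (bc + 3).
Proof.
  intros Hc Hb v. induction v as [|v IHv]; intros m Hi.
  - exists m, 1. split; [|split; auto; lia]. apply exec_while0. now apply (Hc 0 m Hi).
  - destruct (Hb v m Hi) as (m1 & t1 & E1 & I1 & T1).
    destruct (IHv _ I1) as (m2 & t2 & E2 & I2 & T2).
    exists m2, (t1 + 3 + t2). split; [|split; auto; simpl; lia].
    eapply exec_while1; eauto. intros H0. apply (Hc _ _ Hi) in H0. discriminate.
Qed.

Ltac simp_upd := repeat match goal with
  | |- context [upd ?m ?a ?v ?x] =>
      first [ rewrite (upd_same m a v x) by lia | rewrite (upd_other m a v x) by lia ]
  end.
Ltac simp_upd_in H := repeat match type of H with
  | context [upd ?m ?a ?v ?x] =>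
      first [ rewrite (upd_same m a v x) in H by lia | rewrite (upd_other m a v x) in H by lia ]
  end.

Lemma exec_seq_atom (a : atom) c m (Q : memory -> nat -> Prop) :
  (exists m' t, exec c (atom_effect a m) m' t /\ Q m' (1 + t)) ->
  exists m' t, exec (CSeq (CA a) c) m m' t /\ Q m' t.
Proof.
  intros (m' & t & E & H). exists m', (1 + t). split; auto.
  eapply exec_seq; eauto. constructor.
Qed.

Lemma exec_last_atom (a : atom) m (Q : memory -> nat -> Prop) :
  Q (atom_effect a m) 1 -> exists m' t, exec (CA a) m m' t /\ Q m' t.
Proof. intros H. exists (atom_effect a m), 1. split; auto. constructor. Qed.

Lemma exec_seq_cut c1 c2 m (R Q : memory -> nat -> Prop) :
  (exists m1 t1, exec c1 m m1 t1 /\ R m1 t1) ->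
  (forall m1 t1, R m1 t1 -> exists m2 t2, exec c2 m1 m2 t2 /\ Q m2 (t1 + t2)) ->
  exists m2 t, exec (CSeq c1 c2) m m2 t /\ Q m2 t.
Proof.
  intros (m1 & t1 & E1 & H1) H2. destruct (H2 _ _ H1) as (m2 & t2 & E2 & H3).
  exists m2, (t1 + t2). split; auto. eapply exec_seq; eauto.
Qed.

Lemma exec_seq_inv c1 c2 m m' t : exec (CSeq c1 c2) m m' t ->
  exists m1 t1 t2, exec c1 m m1 t1 /\ exec c2 m1 m' t2 /\ t = t1 + t2.
Proof. intros E; inversion E; subst; eauto 7. Qed.

Lemma exec_atom_inv a m m' t : exec (CA a) m m' t -> m' = atom_effect a m /\ t = 1.
Proof. intros E; inversion E; subst; auto. Qed.

Lemma exec_seq_if0 r c1 c2 rest m (Q : memory -> nat -> Prop) : m r = 0 ->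
  (exists m' t, exec (CSeq c1 rest) m m' t /\ Q m' (S t)) ->
  exists m' t, exec (CSeq (CIf r c1 c2) rest) m m' t /\ Q m' t.
Proof.
  intros H (m' & t & E & H1). apply exec_seq_inv in E as (m1 & t1 & t2 & E1 & E2 & ->).
  exists m', (S t1 + t2). split; auto. eapply exec_seq; eauto. now apply exec_if0.
Qed.

Lemma exec_seq_if1 r c1 c2 rest m (Q : memory -> nat -> Prop) : m r <> 0 ->
  (exists m' t, exec (CSeq c2 (CSeq (CA (AConst jump_reg 0)) rest)) m m' t /\ Q m' (t + 2)) ->
  exists m' t, exec (CSeq (CIf r c1 c2) rest) m m' t /\ Q m' t.
Proof.
  intros H (m' & t & E & H1). apply exec_seq_inv in E as (m1 & t1 & t2 & E1 & E2 & ->).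
  apply exec_seq_inv in E2 as (m2 & t3 & t4 & E3 & E4 & ->).
  apply exec_atom_inv in E3 as [-> ->].
  exists m', (t1 + 3 + t4). split; [|now replace (t1 + 3 + t4) with (t1 + (1 + t4) + 2) by lia].
  eapply exec_seq; eauto. now apply exec_if1.
Qed.

Lemma exec_seq_assoc a b c m (Q : memory -> nat -> Prop) :
  (exists m' t, exec (CSeq a (CSeq b c)) m m' t /\ Q m' t) ->
  exists m' t, exec (CSeq (CSeq a b) c) m m' t /\ Q m' t.
Proof.
  intros (m' & t & E & H). apply exec_seq_inv in E as (m1 & t1 & t2 & E1 & E2 & ->).
  apply exec_seq_inv in E2 as (m2 & t3 & t4 & E3 & E4 & ->).
  exists m', (t1 + t3 + t4). split; [|now rewrite <- Nat.add_assoc].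
  eapply exec_seq; eauto. eapply exec_seq; eauto.
Qed.

Ltac run_atom := apply exec_seq_atom; cbn [atom_effect].
Ltac run_atoms := repeat (first [apply exec_seq_assoc | run_atom; simp_upd]).
Ltac run_if Hc := match goal with
  | |- exists _ _, exec (CSeq (CIf ?r _ _) _) ?mm _ _ /\ _ =>
      destruct (Nat.eqb_spec (mm r) 0) as [Hc|Hc];
      [apply exec_seq_if0; [exact Hc|] | apply exec_seq_if1; [exact Hc|]];
      simp_upd_in Hc
  end.

(** * Sums and digits *)

Lemma sum_below_le (f g : nat -> nat) m :
  (forall i, i < m -> f i <= g i) -> sum_below f m <= sum_below g m.
Proof.
  induction m as [|m IHm]; simpl; intros H; auto.
  specialize (IHm (fun i Hi => H i (Nat.lt_lt_succ_r _ _ Hi))).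
  specialize (H m (Nat.lt_succ_diag_r m)). lia.
Qed.

Lemma eq_sum_below (f g : nat -> nat) m :
  (forall i, i < m -> f i = g i) -> sum_below f m = sum_below g m.
Proof. induction m; simpl; intros H; auto. rewrite IHm, H by auto. reflexivity. Qed.

Lemma sum_below_add (f g : nat -> nat) m :
  sum_below (fun i => f i + g i) m = sum_below f m + sum_below g m.
Proof. induction m; simpl; auto. rewrite IHm. lia. Qed.

Lemma sum_below_mulr c (f : nat -> nat) m :
  sum_below (fun i => f i * c) m = sum_below f m * c.
Proof. induction m; simpl; auto. rewrite IHm. lia. Qed.

Lemma sum_below_indicator_le (P : nat -> bool) m :
  sum_below (fun i => if P i then 1 else 0) m <= m.
Proof. induction m; simpl; auto. destruct (P m); lia. Qed.

Lemma sum_below_mono (f : nat -> nat) m1 m2 : m1 <= m2 -> sum_below f m1 <= sum_below f m2.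
Proof. induction 1; simpl; lia. Qed.

Lemma pow_gt0 B j : 0 < B -> 0 < B ^ j.
Proof. intros H. pose proof (Nat.pow_nonzero B j). lia. Qed.

Definition digits (B : nat) (l : nat -> nat) (k : nat) : nat :=
  sum_below (fun j => l j * B ^ j) k.

Lemma digits_lt B l k : (forall j, j < k -> l j < B) -> digits B l k < B ^ k.
Proof.
  unfold digits. induction k as [|k IHk]; simpl; intros H; [lia|].
  specialize (IHk (fun j Hj => H j ltac:(lia))). specialize (H k ltac:(lia)).
  assert (l k * B ^ k <= (B - 1) * B ^ k) by (apply Nat.mul_le_mono_r; lia).
  destruct B; [lia|]. replace (S B - 1) with B in * by lia. simpl. nia.
Qed.

Lemma digits_split B l k j : j < k ->
  exists X, digits B l k = digits B l j + B ^ j * (l j + B * X).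
Proof.
  unfold digits. induction k as [|k IHk]; intros Hj; [lia|].
  destruct (Nat.eq_dec j k) as [->|Hjk].
  - exists 0. simpl. lia.
  - destruct (IHk ltac:(lia)) as [X HX]. exists (X + l k * B ^ (k - j - 1)).
    simpl. rewrite HX.
    replace (B ^ k) with (B ^ j * (B * B ^ (k - j - 1))) at 1; [nia|].
    rewrite <- Nat.pow_succ_r', <- Nat.pow_add_r. f_equal. lia.
Qed.

Lemma digits_digit B l k j : 0 < B -> (forall j, j < k -> l j < B) -> j < k ->
  digits B l k / B ^ j mod B = l j.
Proof.
  intros HB H Hj. destruct (digits_split B l k j Hj) as [X ->].
  pose proof (digits_lt B l j (fun j' Hj' => H j' ltac:(lia))).
  pose proof (pow_gt0 B j HB).
  rewrite Nat.mul_comm, Nat.div_add, Nat.div_small by lia. simpl.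
  rewrite Nat.mul_comm, Nat.Div0.mod_add. apply Nat.mod_small. now apply H.
Qed.

Lemma digits_add_at B l l' k j r : j < k ->
  (forall j', l' j' = l j' + (if j' =? j then r else 0)) ->
  digits B l' k = r * B ^ j + digits B l k.
Proof.
  unfold digits. intros Hj Hl. induction k as [|k IHk]; [lia|]. simpl. rewrite Hl.
  destruct (Nat.eq_dec j k) as [->|Hjk].
  - rewrite Nat.eqb_refl, (eq_sum_below _ (fun j => l j * B ^ j)); [lia|].
    intros i Hi. rewrite Hl. destruct (Nat.eqb_spec i k); lia.
  - rewrite IHk by lia. destruct (Nat.eqb_spec k j); lia.
Qed.

Lemma add_digit_lt_pow B k s j r : 0 < B -> s < B ^ k -> j < k ->
  s / B ^ j mod B + r <= B - 1 -> r * B ^ j + s < B ^ k.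
Proof.
  intros HB Hs Hj Hd.
  pose proof (pow_gt0 B j HB) as Pj.
  set (q := s / B ^ j) in *.
  assert (Hs1 : s = B ^ j * q + s mod B ^ j) by (apply Nat.div_mod; lia).
  assert (Hlo : s mod B ^ j < B ^ j) by (apply Nat.mod_upper_bound; lia).
  assert (Ek : B ^ k = B ^ j * (B * B ^ (k - j - 1))).
  { rewrite <- Nat.pow_succ_r', <- Nat.pow_add_r. f_equal. lia. }
  assert (Hq : q < B * B ^ (k - j - 1)) by (apply Nat.Div0.div_lt_upper_bound; lia).
  assert (Hq2 : q = B * (q / B) + q mod B) by (apply Nat.div_mod; lia).
  assert (Hq3 : q / B < B ^ (k - j - 1)) by (apply Nat.Div0.div_lt_upper_bound; lia).
  assert (q + r < B * B ^ (k - j - 1)) by (assert (q / B + 1 <= B ^ (k - j - 1)) by lia; nia).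
  rewrite Ek. nia.
Qed.

(** * The rounded dynamic program *)

Section DynamicProgram.
Variable I : gap_instance.
Variable Nc : nat.

Local Notation k := (gk I).
Local Notation n := (gn I).

(* Sizes of bin j are measured in units of C_j (Nc + 2) / ((rcap + n) Nc). *)
Definition rcap := (n - 1) * Nc / 2.
Definition radix := rcap + 1.
Definition scale_num := (rcap + n) * Nc.
Definition scale_den := Nc + 2.
Definition rsize i j := gs I i j * scale_num / (scale_den * gC I j).

(* A DP state is the vector of rounded loads, written in base [radix]. *)
Definition digit s j := s / radix ^ j mod radix.

Definition best_value (x : nat * nat * nat) := fst (fst x).
Definition best_bin (x : nat * nat * nat) := snd (fst x).
Definition best_next (x : nat * nat * nat) := snd x.

(* The tests use truncated subtraction exactly as the machine code does;
   [best_bin] is 0 for "unassigned" and j+1 for bin j. *)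
Definition try_bin (i s : nat) (Vn : nat -> nat) (j : nat) (acc : nat * nat * nat) :=
  if digit s j + rsize i j - rcap =? 0 then
    let s' := rsize i j * radix ^ j + s in
    let cand := gp I i j + Vn s' in
    if cand - best_value acc =? 0 then acc else (cand, S j, s')
  else acc.

Fixpoint best_choice (i s : nat) (Vn : nat -> nat) (j : nat) : nat * nat * nat :=
  match j with
  | O => (Vn s, 0, s)
  | S j' => try_bin i s Vn j' (best_choice i s Vn j')
  end.

Fixpoint value_rec (d s : nat) : nat :=
  match d with
  | O => 0
  | S d' => best_value (best_choice (n - S d') s (value_rec d') k)
  end.

(* [value i s]: the best profit of items i, ..., n-1 from rounded loads s,
   keeping every rounded load at most [rcap]. *)
Definition value i := value_rec (n - i).

Lemma value_S i s : i < n -> value i s = best_value (best_choice i s (value (S i)) k).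
Proof.
  intros H. unfold value. replace (n - i) with (S (n - S i)) by lia. simpl.
  now replace (n - S (n - S i)) with i by lia.
Qed.

Lemma value_end s : value n s = 0.
Proof. unfold value. now rewrite Nat.sub_diag. Qed.

Definition fits i s j := digit s j + rsize i j <= rcap.

Lemma best_choice_spec i s Vn j :
  let x := best_choice i s Vn j in
  Vn s <= best_value x /\
  (forall j', j' < j -> fits i s j' ->
     gp I i j' + Vn (rsize i j' * radix ^ j' + s) <= best_value x) /\
  (best_bin x = 0 -> best_value x = Vn s /\ best_next x = s) /\
  (forall j', best_bin x = S j' ->
     j' < j /\ fits i s j' /\ best_next x = rsize i j' * radix ^ j' + s /\
     best_value x = gp I i j' + Vn (best_next x)).
Proof.
  induction j as [|j IHj]; simpl.
  - split; [auto|]. split; [intros; lia|]. split; [auto|]. discriminate.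
  - destruct IHj as (H1 & H2 & H3 & H4).
    unfold try_bin, fits in *. set (x := best_choice i s Vn j) in *.
    destruct (Nat.eqb_spec (digit s j + rsize i j - rcap) 0) as [F|F].
    + cbv zeta.
      destruct (Nat.eqb_spec (gp I i j + Vn (rsize i j * radix ^ j + s) - best_value x) 0) as [G|G].
      * split; [auto|]. split; [|split; auto].
        -- intros j' Hj' Hf. destruct (Nat.eq_dec j' j); [subst; lia|]. apply H2; auto; lia.
        -- intros j' Ha. destruct (H4 j' Ha) as (A1 & A2 & A3 & A4). repeat split; auto.
      * unfold best_value, best_bin, best_next; simpl. fold (best_value x).
        split; [lia|]. split; [|split; [discriminate|]].
        -- intros j' Hj' Hf. destruct (Nat.eq_dec j' j); [subst; lia|].
           specialize (H2 j' ltac:(lia) Hf). lia.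
        -- intros j' E. injection E as <-. repeat split; auto; lia.
    + split; [auto|]. split; [|split; auto].
      * intros j' Hj' Hf. destruct (Nat.eq_dec j' j); [subst; lia|]. apply H2; auto; lia.
      * intros j' Ha. destruct (H4 j' Ha) as (A1 & A2 & A3 & A4). repeat split; auto.
Qed.

Definition encode (l : nat -> nat) := digits radix l k.

Definition rload (b : assignment) i j :=
  sum_below (fun i' => if in_bin b i' j then rsize i' j else 0) i.

Definition item_profit (b : assignment) (i : nat) :=
  match b i with Some j => gp I i j | None => 0 end.

Lemma radix_pos : 0 < radix.
Proof. unfold radix; lia. Qed.

Lemma encode_zero : encode (fun _ => 0) = 0.
Proof. unfold encode, digits. generalize k. intros m; induction m as [|m IHm]; cbn [sum_below]; [reflexivity|]. rewrite IHm. lia. Qed.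

Lemma encode_rload0 b : encode (rload b 0) = 0.
Proof.
  rewrite <- encode_zero at 2. apply eq_sum_below. reflexivity.
Qed.

Lemma digit_encode l j : (forall j, j < k -> l j <= rcap) -> j < k -> digit (encode l) j = l j.
Proof.
  intros H Hj. apply digits_digit; auto using radix_pos.
  intros j' Hj'. specialize (H j' Hj'). unfold radix; lia.
Qed.

Lemma rload_S b i j : rload b (S i) j = rload b i j + (if in_bin b i j then rsize i j else 0).
Proof. reflexivity. Qed.

Lemma rload_mono b i1 i2 j : i1 <= i2 -> rload b i1 j <= rload b i2 j.
Proof. intros; now apply sum_below_mono. Qed.

Lemma encode_rload_assign b i j : b i = Some j -> j < k ->
  encode (rload b (S i)) = rsize i j * radix ^ j + encode (rload b i).
Proof.
  intros Eb Hj. apply digits_add_at; auto. intros j'. rewrite rload_S.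
  unfold in_bin. rewrite Eb. destruct (Nat.eqb_spec j j'), (Nat.eqb_spec j' j); subst; lia.
Qed.

Lemma encode_rload_skip b i : b i = None -> encode (rload b (S i)) = encode (rload b i).
Proof.
  intros Eb. apply eq_sum_below. intros j _. rewrite rload_S. unfold in_bin. rewrite Eb. lia.
Qed.

Fixpoint dp_state (i : nat) : nat :=
  match i with
  | 0 => 0
  | S i' => best_next (best_choice i' (dp_state i') (value (S i')) k)
  end.

Definition dp_choice i := best_bin (best_choice i (dp_state i) (value (S i)) k).

Definition dp_assignment : assignment := fun i =>
  match dp_choice i with 0 => None | S j => Some j end.

Lemma dp_profit_prefix i : i <= n ->
  sum_below (item_profit dp_assignment) i + value i (dp_state i) = value 0 0.
Proof.
  induction i as [|i IHi]; intros Hi; [reflexivity|].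
  rewrite <- IHi by lia. cbn [sum_below dp_state]. rewrite (value_S i (dp_state i)) by lia.
  pose proof (best_choice_spec i (dp_state i) (value (S i)) k) as (_ & _ & H3 & H4).
  unfold item_profit, dp_assignment, dp_choice in *.
  destruct (best_bin (best_choice i (dp_state i) (value (S i)) k)) as [|j].
  - destruct (H3 eq_refl) as [-> ->]. lia.
  - destruct (H4 j eq_refl) as (_ & _ & _ & ->). lia.
Qed.

Lemma dp_state_encode i : i <= n ->
  dp_state i = encode (rload dp_assignment i) /\
  forall j, j < k -> rload dp_assignment i j <= rcap.
Proof.
  induction i as [|i IHi]; intros Hi.
  - split; [now rewrite encode_rload0|]. intros; unfold rload; simpl; lia.
  - destruct (IHi ltac:(lia)) as [E1 E2]. simpl.
    pose proof (best_choice_spec i (dp_state i) (value (S i)) k) as (_ & _ & H3 & H4).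
    destruct (dp_choice i) as [|j] eqn:Ea.
    + assert (Eb : dp_assignment i = None) by (unfold dp_assignment; now rewrite Ea).
      unfold dp_choice in Ea. destruct (H3 Ea) as [_ ->].
      rewrite encode_rload_skip by exact Eb. split; [exact E1|].
      intros j Hj. rewrite rload_S. unfold in_bin. rewrite Eb. specialize (E2 j Hj). lia.
    + assert (Eb : dp_assignment i = Some j) by (unfold dp_assignment; now rewrite Ea).
      unfold dp_choice in Ea. destruct (H4 j Ea) as (A1 & A2 & -> & _).
      unfold fits in A2. rewrite E1, digit_encode in A2 by auto.
      rewrite (encode_rload_assign _ i j Eb A1). split; [now rewrite E1|].
      intros j' Hj'. rewrite rload_S. unfold in_bin. rewrite Eb.
      destruct (Nat.eqb_spec j j'); [subst; lia|]. specialize (E2 j' Hj'). lia.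
Qed.

Lemma dp_state_lt i : i <= n -> dp_state i < radix ^ k.
Proof.
  intros Hi. destruct (dp_state_encode i Hi) as [-> H]. apply digits_lt.
  intros j Hj. specialize (H j Hj). unfold radix. lia.
Qed.

Lemma dp_bins_ok : bins_ok I dp_assignment.
Proof.
  intros i j Hi Ea. unfold dp_assignment, dp_choice in Ea.
  pose proof (best_choice_spec i (dp_state i) (value (S i)) k) as (_ & _ & _ & H4).
  destruct (best_bin _) as [|j'] eqn:E; [discriminate|]. injection Ea as <-.
  now destruct (H4 j' eq_refl).
Qed.

Hypothesis Hvalid : valid_instance I.

Lemma bins_pos : 1 <= k. Proof. apply Hvalid. Qed.

Lemma items_pos : 1 <= n. Proof. apply Hvalid. Qed.

Lemma capacity_pos j : j < k -> 1 <= gC I j. Proof. apply Hvalid. Qed.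

Lemma scale_num_lt : scale_num < radix * scale_den.
Proof.
  pose proof items_pos. unfold scale_num, scale_den, radix, rcap.
  pose proof (Nat.div_mod ((n - 1) * Nc) 2 ltac:(lia)).
  pose proof (Nat.mod_upper_bound ((n - 1) * Nc) 2 ltac:(lia)). nia.
Qed.

Lemma feasible_rload_le b j : feasible I b -> j < k -> rload b n j <= rcap.
Proof.
  intros [Hok Hld] Hj. specialize (Hld j Hj). pose proof (capacity_pos j Hj) as HC.
  assert (HD : 0 < scale_den * gC I j) by (unfold scale_den; nia).
  assert (A : rload b n j * (scale_den * gC I j) <= bin_load I b j * scale_num).
  { unfold rload, bin_load. rewrite <- !sum_below_mulr. apply sum_below_le. intros i Hi.
    destruct (in_bin b i j); [|lia]. unfold rsize.
    rewrite Nat.mul_comm. apply Nat.Div0.mul_div_le. }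
  assert (B : bin_load I b j * scale_num <= gC I j * scale_num) by nia.
  pose proof scale_num_lt.
  assert (Hm : rload b n j * (scale_den * gC I j) < radix * (scale_den * gC I j)) by nia.
  apply Nat.mul_lt_mono_pos_r in Hm; unfold radix in *; lia.
Qed.

(* Every feasible solution is dominated by the DP value along its own states. *)
Lemma value_ge_suffix b : feasible I b -> forall d, d <= n ->
  sum_below (item_profit b) n <=
  sum_below (item_profit b) (n - d) + value (n - d) (encode (rload b (n - d))).
Proof.
  intros Hf d. induction d as [|d IHd]; intros Hd; [rewrite Nat.sub_0_r; lia|].
  set (i := n - S d). assert (Ei : n - d = S i) by (unfold i; lia).
  specialize (IHd ltac:(lia)). rewrite Ei in IHd. simpl in IHd.
  assert (Hi : i < n) by lia.
  rewrite (value_S i _ Hi).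
  pose proof (best_choice_spec i (encode (rload b i)) (value (S i)) k) as (H1 & H2 & _).
  unfold item_profit in IHd |- *. destruct (b i) as [j|] eqn:Eb.
  - assert (Hj : j < k) by (apply (proj1 Hf i j Hi Eb)).
    assert (Hfit : fits i (encode (rload b i)) j).
    { unfold fits. rewrite digit_encode; auto.
      - pose proof (feasible_rload_le b j Hf Hj). pose proof (rload_mono b (S i) n j ltac:(lia)).
        rewrite rload_S in H0. unfold in_bin in H0. rewrite Eb, Nat.eqb_refl in H0. lia.
      - intros j' Hj'. pose proof (feasible_rload_le b j' Hf Hj').
        pose proof (rload_mono b i n j' ltac:(lia)). lia. }
    specialize (H2 j Hj Hfit). rewrite (encode_rload_assign b i j Eb Hj) in IHd. lia.
  - rewrite (encode_rload_skip b i Eb) in IHd. lia.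
Qed.

Lemma profit_le_value b : feasible I b -> profit I b <= value 0 0.
Proof.
  intros Hf. pose proof (value_ge_suffix b Hf n (le_n _)) as H.
  rewrite Nat.sub_diag, encode_rload0 in H. exact H.
Qed.

Lemma dp_profit_opt b : feasible I b -> profit I b <= profit I dp_assignment.
Proof.
  intros Hf. pose proof (profit_le_value b Hf) as Hb.
  pose proof (dp_profit_prefix n (le_n _)) as H. rewrite value_end in H.
  change (profit I dp_assignment) with (sum_below (item_profit dp_assignment) n). lia.
Qed.

Lemma dp_load j : j < k -> bin_load I dp_assignment j * Nc <= scale_den * gC I j.
Proof.
  intros Hj. pose proof (capacity_pos j Hj) as HC.
  destruct (dp_state_encode n (le_n _)) as [_ Hl]. specialize (Hl j Hj).
  set (X := scale_den * gC I j).
  assert (HX : 0 < X) by (unfold X, scale_den; nia).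
  assert (A : bin_load I dp_assignment j * scale_num <=
    sum_below (fun i => (if in_bin dp_assignment i j then rsize i j else 0) * X +
                        (if in_bin dp_assignment i j then 1 else 0) * X) n).
  { unfold bin_load. rewrite <- sum_below_mulr. apply sum_below_le. intros i Hi.
    destruct (in_bin dp_assignment i j); [|lia]. unfold rsize. fold X.
    pose proof (Nat.mul_succ_div_gt (gs I i j * scale_num) X ltac:(lia)). lia. }
  rewrite sum_below_add, !sum_below_mulr in A. fold (rload dp_assignment n j) in A.
  pose proof (sum_below_indicator_le (fun i => in_bin dp_assignment i j) n).
  assert (B : bin_load I dp_assignment j * scale_num <= (rcap + n) * X) by nia.
  unfold scale_num in B. pose proof items_pos.
  assert (Hm : bin_load I dp_assignment j * Nc * (rcap + n) <= X * (rcap + n)) by nia.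
  apply Nat.mul_le_mono_pos_r in Hm; lia.
Qed.

End DynamicProgram.

(** * The RAM program and its verification *)

Coercion CA : atom >-> cmd.
Notation "a ;; b" := (CSeq a b) (at level 100, right associativity).

Ltac decide_init_region :=
  unfold init_memory; cbv zeta;
  repeat match goal with
  | |- context [Nat.eqb ?x ?y] => destruct (Nat.eqb_spec x y); try nia
  | |- context [Nat.ltb ?x ?y] => destruct (Nat.ltb_spec x y); try nia
  end.

Lemma div_mod_row i j k : j < k -> (i * k + j) / k = i /\ (i * k + j) mod k = j.
Proof.
  intros H. split.
  - rewrite Nat.div_add_l, Nat.div_small by lia. lia.
  - rewrite Nat.add_comm, Nat.Div0.mod_add. apply Nat.mod_small; lia.
Qed.

Lemma init_memory_capacity I j : j < gk I -> init_memory I (2 + j) = gC I j.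
Proof. intros Hj. decide_init_region. f_equal; lia. Qed.

Lemma init_memory_size I i j : i < gn I -> j < gk I ->
  init_memory I (2 + gk I + (i * gk I + j)) = gs I i j.
Proof.
  intros Hi Hj. decide_init_region.
  replace (2 + gk I + (i * gk I + j) - 2 - gk I) with (i * gk I + j) by lia.
  now destruct (div_mod_row i j (gk I) Hj) as [-> ->].
Qed.

Lemma init_memory_profit I i j : i < gn I -> j < gk I ->
  init_memory I (2 + gk I + gn I * gk I + (i * gk I + j)) = gp I i j.
Proof.
  intros Hi Hj. decide_init_region.
  replace (2 + gk I + gn I * gk I + (i * gk I + j) - 2 - gk I - gn I * gk I)
    with (i * gk I + j) by lia.
  now destruct (div_mod_row i j (gk I) Hj) as [-> ->].
Qed.

Lemma init_memory_high I x : 2 + gk I + 2 * gn I * gk I <= x -> init_memory I x = 0.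
Proof. intros H. decide_init_region. Qed.

(* Register conventions (cells 0..31); the input is first moved to
   D = 64 n k so that these cells are free.
   1: D, 3: k, 4: n, 5: radix, 6: rcap, 7: scale_num, 8: scale_den, 9: 1,
   10: number of states S = radix^k, 11: base of the value table,
   12/13/14: bases of the sizes, profits and capacities inside the input,
   31: base of the array of chosen bins.
   15: item i, 16: state s, 17: bin j, 18: radix^j, 19/20/21: best
   (value, bin, next state) so far, 22/25/26: loop counters, 23/24: bases of
   table layers i+1 and i, 27-30: temporaries, 2: jump scratch.
   Layer i of the table holds [value i s] at M[11] + i * S + s (i <= n), and
   the bin chosen for item i is stored at M[31] + i. *)

Definition skip_code : cmd := AConst 2 0.

Definition try_bin_code : cmd :=
  ADiv 27 16 18 ;; ADiv 28 27 5 ;; AMul 28 28 5 ;; ASub 27 27 28 ;;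
  AAdd 28 14 17 ;; ALoad 29 28 ;; AMul 29 8 29 ;;
  AMul 28 15 3 ;; AAdd 28 28 17 ;; AAdd 28 28 12 ;; ALoad 30 28 ;; AMul 30 30 7 ;; ADiv 30 30 29 ;;
  AAdd 27 27 30 ;; ASub 27 27 6 ;;
  CIf 27
    (AMul 28 15 3 ;; AAdd 28 28 17 ;; AAdd 28 28 13 ;; ALoad 29 28 ;;
     AMul 30 30 18 ;; AAdd 30 30 16 ;;
     AAdd 28 23 30 ;; ALoad 28 28 ;; AAdd 29 29 28 ;;
     ASub 28 29 19 ;;
     CIf 28 skip_code (AConst 19 0 ;; AAdd 19 19 29 ;; AAdd 20 17 9 ;; AConst 21 0 ;; AAdd 21 21 30))
    skip_code ;;
  AAdd 17 17 9 ;; AMul 18 18 5 ;; ASub 22 22 9.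

Definition best_choice_code : cmd :=
  AAdd 28 23 16 ;; ALoad 19 28 ;; AConst 20 0 ;; AConst 21 0 ;; AAdd 21 21 16 ;;
  AConst 17 0 ;; AConst 18 1 ;; AConst 22 0 ;; AAdd 22 22 3 ;;
  CWhile 22 try_bin_code.

Definition fill_entry_code : cmd :=
  best_choice_code ;; AAdd 28 24 16 ;; AStore 28 19 ;; AAdd 16 16 9 ;; ASub 25 25 9.

Definition fill_layer_code : cmd :=
  ASub 15 26 9 ;; AMul 24 15 10 ;; AAdd 24 24 11 ;; AAdd 23 24 10 ;; AConst 16 0 ;;
  AConst 25 0 ;; AAdd 25 25 10 ;;
  CWhile 25 fill_entry_code ;;
  ASub 26 26 9.

Definition recon_step_code : cmd :=
  AMul 24 15 10 ;; AAdd 24 24 11 ;; AAdd 23 24 10 ;; best_choice_code ;;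
  AAdd 28 31 15 ;; AStore 28 20 ;; AConst 16 0 ;; AAdd 16 16 21 ;; AAdd 15 15 9 ;; ASub 26 26 9.

Definition setup_code (Nc : nat) : cmd :=
  ALoad 3 1 ;; AConst 9 1 ;; AAdd 28 1 9 ;; ALoad 4 28 ;;
  ASub 27 4 9 ;; AConst 28 Nc ;; AMul 27 27 28 ;; AConst 28 2 ;; ADiv 6 27 28 ;;
  AAdd 5 6 9 ;;
  AAdd 27 6 4 ;; AConst 28 Nc ;; AMul 7 27 28 ;;
  AConst 8 (Nc + 2) ;;
  AConst 28 2 ;; AAdd 14 1 28 ;; AAdd 12 14 3 ;; AMul 28 4 3 ;; AAdd 13 12 28 ;;
  AMul 27 4 3 ;; AAdd 27 27 27 ;; AAdd 27 27 12 ;; AConst 28 7 ;; AAdd 11 27 28 ;;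
  AConst 10 1 ;; AConst 22 0 ;; AAdd 22 22 3 ;; CWhile 22 (AMul 10 10 5 ;; ASub 22 22 9) ;;
  AAdd 27 4 9 ;; AMul 27 27 10 ;; AAdd 31 11 27.

Definition fill_table_code : cmd := AConst 26 0 ;; AAdd 26 26 4 ;; CWhile 26 fill_layer_code.

Definition recon_code : cmd := AConst 15 0 ;; AConst 16 0 ;; AConst 26 0 ;; AAdd 26 26 4 ;; CWhile 26 recon_step_code.

Definition output_code : cmd :=
  ASub 27 11 1 ;; AConst 28 7 ;; ASub 27 27 28 ;;
  AConst 3 0 ;; AAdd 3 3 4 ;; AConst 4 0 ;; AAdd 4 4 31 ;; AConst 0 0 ;; AAdd 0 0 27 ;; AConst 1 1 ;;
  CWhile 3 (ALoad 2 4 ;; AStore 0 2 ;; AAdd 4 4 1 ;; AAdd 0 0 1 ;; ASub 3 3 1).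

(* Cell 1 is overwritten by D before anything else, so cells 0 and 2..6 are
   saved explicitly and n is recovered as D / (64 k); cells 7.. are copied by
   a loop. *)
Definition relocate_code : cmd :=
  AMul 1 1 0 ;; AAdd 1 1 1 ;; AAdd 1 1 1 ;; AAdd 1 1 1 ;; AAdd 1 1 1 ;; AAdd 1 1 1 ;; AAdd 1 1 1 ;;
  AStore 1 2 ;;
  AConst 2 3 ;; AAdd 2 1 2 ;; AStore 2 3 ;;
  AConst 2 4 ;; AAdd 2 1 2 ;; AStore 2 4 ;;
  AConst 2 5 ;; AAdd 2 1 2 ;; AStore 2 5 ;;
  AConst 2 6 ;; AAdd 2 1 2 ;; AStore 2 6 ;;
  ALoad 3 1 ;; AConst 2 2 ;; AAdd 2 1 2 ;; AStore 2 3 ;;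
  AStore 1 0 ;;
  AConst 3 64 ;; AMul 3 3 0 ;; ADiv 4 1 3 ;; AConst 2 1 ;; AAdd 2 1 2 ;; AStore 2 4 ;;
  AMul 5 4 0 ;; AAdd 5 5 5 ;; AAdd 5 5 0 ;; AConst 6 2 ;; AAdd 5 5 6 ;; AConst 6 7 ;; ASub 3 5 6 ;;
  AConst 4 7 ;; AAdd 5 1 4 ;; AConst 6 1 ;;
  CWhile 3 (ALoad 2 4 ;; AStore 5 2 ;; AAdd 4 4 6 ;; AAdd 5 5 6 ;; ASub 3 3 6).

Definition main_code (Nc : nat) : cmd := relocate_code ;; setup_code Nc ;; fill_table_code ;; recon_code ;; output_code.

Section Verification.
Variable I : gap_instance.
Variable Nc : nat.
Hypothesis Hvalid : valid_instance I.

Local Notation k := (gk I).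
Local Notation n := (gn I).
Local Notation B := (radix I Nc).
Local Notation L := (rcap I Nc).
Local Notation V := (value I Nc).
Local Notation choice := (best_choice I Nc).
Local Notation st := (dp_state I Nc).

Definition input_base := 64 * (n * k).
Definition input_size := 2 + k + 2 * n * k.
Definition table_base := input_base + input_size + 7.
Definition nstates := B ^ k.
Definition choice_base := table_base + (n + 1) * nstates.

Definition regs_ok (m : memory) : Prop :=
  m 1 = input_base /\ m 3 = k /\ m 4 = n /\ m 5 = B /\ m 6 = L /\ m 7 = scale_num I Nc /\
  m 8 = scale_den Nc /\ m 9 = 1 /\ m 10 = nstates /\ m 11 = table_base /\
  m 12 = input_base + 2 + k /\ m 13 = input_base + 2 + k + n * k /\ m 14 = input_base + 2 /\
  m 31 = choice_base.

Definition input_copied (m : memory) : Prop :=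
  forall x, x < input_size -> m (input_base + x) = init_memory I x.

Definition layer_filled (i : nat) (m : memory) : Prop :=
  forall s, s < nstates -> m (table_base + i * nstates + s) = V i s.

Lemma layout_bounds :
  64 <= input_base /\ 5 <= input_size /\ input_size + 7 <= input_base /\
  n <= input_base /\ 64 <= table_base.
Proof.
  pose proof (bins_pos I Hvalid). pose proof (items_pos I Hvalid).
  unfold table_base, input_base, input_size. nia.
Qed.

Lemma nstates_pos : 1 <= nstates.
Proof. pose proof (pow_gt0 B k (radix_pos I Nc)). unfold nstates. lia. Qed.

Lemma digit_by_sub s j : digit I Nc s j = s / B ^ j - s / B ^ j / B * B.
Proof. unfold digit. rewrite Nat.Div0.mod_eq. lia. Qed.

Lemma input_copied_entries m i j : input_copied m -> i < n -> j < k ->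
  m (input_base + 2 + j) = gC I j /\
  m (i * k + j + (input_base + 2 + k)) = gs I i j /\
  m (i * k + j + (input_base + 2 + k + n * k)) = gp I i j.
Proof.
  intros Hin Hi Hj.
  repeat split.
  - replace (input_base + 2 + j) with (input_base + (2 + j)) by lia.
    rewrite Hin by (unfold input_size; lia). now apply init_memory_capacity.
  - replace (i * k + j + (input_base + 2 + k)) with (input_base + (2 + k + (i * k + j))) by lia.
    rewrite Hin by (unfold input_size; nia). now apply init_memory_size.
  - replace (i * k + j + (input_base + 2 + k + n * k))
      with (input_base + (2 + k + n * k + (i * k + j))) by lia.
    rewrite Hin by (unfold input_size; nia). now apply init_memory_profit.
Qed.

Lemma try_bin_code_spec m i s j v :
  regs_ok m -> input_copied m -> layer_filled (S i) m -> i < n -> s < nstates -> m 15 = i -> m 16 = s ->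
  m 23 = table_base + S i * nstates -> m 17 = j -> m 18 = B ^ j -> m 22 = S v -> j < k ->
  m 19 = best_value (choice i s (V (S i)) j) -> m 20 = best_bin (choice i s (V (S i)) j) ->
  m 21 = best_next (choice i s (V (S i)) j) ->
  exists m' t, exec try_bin_code m m' t /\
    (m' 17 = S j /\ m' 18 = B ^ S j /\ m' 22 = v /\
     m' 19 = best_value (choice i s (V (S i)) (S j)) /\ m' 20 = best_bin (choice i s (V (S i)) (S j)) /\
     m' 21 = best_next (choice i s (V (S i)) (S j))) /\ t <= 50.
Proof.
  intros Hc Hin Hl Hi Hs R15 R16 R23 R17 R18 R22 Hj R19 R20 R21.
  pose proof layout_bounds as (HD & HE & HED & HnD & HTV).
  destruct Hc as (C1 & C3 & C4 & C5 & C6 & C7 & C8 & C9 & C10 & C11 & C12 & C13 & C14 & C31).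
  destruct (input_copied_entries m i j Hin Hi Hj) as (HCj & Hsij & Hpij).
  unfold try_bin_code. run_atoms. rewrite ?C3, ?C5, ?C6, ?C7, ?C8, ?C9, ?C12, ?C13, ?C14, ?R15, ?R16, ?R17, ?R18, ?R19, ?R23.
  rewrite ?HCj, ?Hsij.
  cbn [best_choice]. unfold try_bin. rewrite digit_by_sub. unfold rsize.
  run_if Hc; rewrite ?C3, ?C5, ?C6, ?C7, ?C8, ?C9, ?C12, ?C13, ?C14, ?R15, ?R16, ?R17, ?R18, ?R19, ?R23, ?HCj, ?Hsij in Hc.
  - rewrite Hc. cbn [Nat.eqb].
    run_atoms. rewrite ?C3, ?C5, ?C6, ?C7, ?C8, ?C9, ?C12, ?C13, ?C14, ?R15, ?R16, ?R17, ?R18, ?R19, ?R23.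
    rewrite ?Hpij.
    set (r := gs I i j * scale_num I Nc / (scale_den Nc * gC I j)) in *.
    assert (Hns : r * B ^ j + s < nstates).
    { unfold nstates. apply add_digit_lt_pow; auto. apply radix_pos.
      rewrite Nat.Div0.mod_eq by (pose proof (radix_pos I Nc); lia). assert (B = L + 1) by reflexivity. lia. }
    assert (HV : m (table_base + S i * nstates + (r * B ^ j + s)) = V (S i) (r * B ^ j + s)) by (apply Hl; auto).
    rewrite HV.
    run_if Hc2; rewrite ?R19 in Hc2.
    + rewrite Hc2. cbn [Nat.eqb]. unfold skip_code. run_atoms. apply exec_last_atom; cbn [atom_effect]; simp_upd.
      rewrite ?R17, ?C9, ?R18, ?C5, ?R22, ?R19, ?R20, ?R21.
      split. split. lia. split. rewrite Nat.pow_succ_r'. lia. split. lia. auto. lia.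
    + replace (_ =? 0) with false by (symmetry; apply Nat.eqb_neq; exact Hc2).
      run_atoms. apply exec_last_atom; cbn [atom_effect]; simp_upd. rewrite ?R17, ?C9, ?R18, ?C5, ?R22.
      unfold best_value, best_bin, best_next; cbn [fst snd].
      split. split. lia. split. rewrite Nat.pow_succ_r'. lia. split. lia. split. lia. split; lia. lia.
  - replace (_ =? 0) with false by (symmetry; apply Nat.eqb_neq; exact Hc).
    unfold skip_code. run_atoms. apply exec_last_atom; cbn [atom_effect]; simp_upd. rewrite ?R17, ?C9, ?R18, ?C5, ?R22, ?R19, ?R20, ?R21.
    split. split. lia. split. rewrite Nat.pow_succ_r'. lia. split. lia. auto. lia.
Qed.

Definition kept_by_best_choice (z : nat) : Prop := z <= 16 \/ 23 <= z <= 26 \/ 31 <= z.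

Lemma regs_ok_frame m m' : regs_ok m -> (forall z, (z = 1 \/ (3 <= z <= 14) \/ z = 31) -> m' z = m z) -> regs_ok m'.
Proof. intros (C1 & C3 & C4 & C5 & C6 & C7 & C8 & C9 & C10 & C11 & C12 & C13 & C14 & C31) H.
  unfold regs_ok. rewrite !H by lia. tauto. Qed.

Lemma input_copied_frame m m' : input_copied m -> (forall z, input_base <= z < input_base + input_size -> m' z = m z) -> input_copied m'.
Proof. intros Hi H x Hx. rewrite H by lia. apply Hi; auto. Qed.

Lemma layer_filled_frame i m m' : layer_filled i m -> (forall z, 32 <= z -> m' z = m z) -> layer_filled i m'.
Proof. intros Hi H x Hx. rewrite H. apply Hi; auto. unfold table_base; pose proof layout_bounds; lia. Qed.

Lemma best_choice_code_spec m i s :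
  regs_ok m -> input_copied m -> layer_filled (S i) m -> i < n -> s < nstates -> m 15 = i -> m 16 = s ->
  m 23 = table_base + S i * nstates ->
  exists m' t, exec best_choice_code m m' t /\
    (m' 19 = best_value (choice i s (V (S i)) k) /\ m' 20 = best_bin (choice i s (V (S i)) k) /\
     m' 21 = best_next (choice i s (V (S i)) k)) /\ t <= 10 + k * 56.
Proof.
  intros Hc Hin Hl Hi Hs R15 R16 R23.
  pose proof layout_bounds as (HD & HE & HED & HnD & HTV).
  pose proof Hc as (C1 & C3 & C4 & C5 & C6 & C7 & C8 & C9 & C10 & C11 & C12 & C13 & C14 & C31).
  unfold best_choice_code. run_atoms. rewrite ?C3, ?R16, ?R23.
  match goal with |- exists _ _, exec _ ?mm _ _ /\ _ => set (m0 := mm) end.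
  set (Inv := fun v (m1 : memory) => v <= k /\ (forall z, z <> 2 -> kept_by_best_choice z -> m1 z = m z) /\
     m1 17 = k - v /\ m1 18 = B ^ (k - v) /\ m1 22 = v /\
     m1 19 = best_value (choice i s (V (S i)) (k - v)) /\ m1 20 = best_bin (choice i s (V (S i)) (k - v)) /\
     m1 21 = best_next (choice i s (V (S i)) (k - v))).
  assert (HI : Inv k m0).
  { unfold Inv, m0. simp_upd. rewrite Nat.sub_diag. cbn [best_choice best_value best_bin best_next fst snd].
    rewrite ?R16, ?R23. split. lia. split. { intros z Hz Hk. unfold kept_by_best_choice in Hk. simp_upd. auto. }
    assert (HH : m (table_base + S i * nstates + s) = V (S i) s) by (apply Hl; auto). rewrite HH.
    repeat split; auto. }
  assert (W1 : forall v m1, Inv v m1 -> (m1 22 = 0 <-> v = 0)).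
  { intros v m1 (_ & _ & _ & _ & H & _). lia. }
  assert (W2 : forall v m1, Inv (S v) m1 -> exists m3 t3, exec try_bin_code m1 m3 t3 /\ Inv v (upd m3 jump_reg 0) /\ t3 <= 53).
  { intros v m1 (Hv & Hf & R17 & R18 & R22 & R19 & R20 & R21).
    assert (Hf32 : forall z, 32 <= z -> m1 z = m z) by (intros; apply Hf; unfold kept_by_best_choice; lia).
    destruct (try_bin_code_spec m1 i s (k - S v) v) as (m3 & t3 & E3 & (S17 & S18 & S22 & S19 & S20 & S21) & T3); auto.
    + apply (regs_ok_frame m); auto. intros z Hz. apply Hf; unfold kept_by_best_choice; lia.
    + apply (input_copied_frame m); auto. intros z Hz. apply Hf32. lia.
    + apply (layer_filled_frame _ m); auto.
    + rewrite Hf; auto. unfold kept_by_best_choice; lia.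
    + rewrite Hf; auto. unfold kept_by_best_choice; lia.
    + rewrite Hf; auto. unfold kept_by_best_choice; lia.
    + lia.
    + exists m3, t3. split; auto. split; [|lia].
      assert (Fr : forall z, ~ In z (written try_bin_code) -> m3 z = m1 z) by (apply exec_frame with t3; auto).
      replace (S (k - S v)) with (k - v) in * by lia.
      unfold Inv. simp_upd. split. lia. split.
      * intros z Hz Hk. simp_upd. rewrite Fr. apply Hf; auto. simpl. unfold kept_by_best_choice in Hk. lia.
      * repeat split; auto. }
  destruct (while_rule 22 try_bin_code Inv 53 W1 W2 k m0 HI) as (m2 & t2 & E2 & I2 & T2).
  - exists m2, t2. split; auto. destruct I2 as (_ & _ & _ & _ & _ & R19 & R20 & R21).
    rewrite Nat.sub_0_r in *. split. auto. lia.
Qed.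

Lemma best_choice_code_frame m m1 t : exec best_choice_code m m1 t ->
  forall z, z <> 2 -> kept_by_best_choice z -> m1 z = m z.
Proof.
  intros E z Hz Hk. apply (exec_frame _ _ _ _ E); [reflexivity|].
  simpl. unfold kept_by_best_choice in Hk. lia.
Qed.

Definition layers_filled_from a m := forall j, a <= j -> j <= n -> layer_filled j m.

Lemma fill_entry_spec m i v :
  regs_ok m -> input_copied m -> layers_filled_from (S i) m -> i < n -> v < nstates ->
  m 15 = i -> m 16 = nstates - S v -> m 25 = S v -> m 23 = table_base + S i * nstates -> m 24 = table_base + i * nstates ->
  (forall s', s' < nstates - S v -> m (table_base + i * nstates + s') = V i s') ->
  exists m' t, exec fill_entry_code m m' t /\
   (regs_ok m' /\ input_copied m' /\ layers_filled_from (S i) m' /\ m' 15 = i /\ m' 16 = nstates - v /\ m' 25 = v /\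
    m' 23 = table_base + S i * nstates /\ m' 24 = table_base + i * nstates /\ m' 26 = m 26 /\
    (forall s', s' < nstates - v -> m' (table_base + i * nstates + s') = V i s') /\
    (forall z, z < table_base + i * nstates -> 32 <= z -> m' z = m z) /\
    (forall z, table_base + S i * nstates <= z -> m' z = m z)) /\ t <= 15 + k * 56.
Proof.
  intros Hc Hin Hl Hi Hv R15 R16 R25 R23 R24 Hpart.
  pose proof layout_bounds as (HD & HE & HED & HnD & HTV).
  pose proof nstates_pos as HS.
  unfold fill_entry_code.
  apply exec_seq_cut with (R := fun m1 t1 => exec best_choice_code m m1 t1 /\
      (m1 19 = best_value (choice i (nstates - S v) (V (S i)) k) /\ m1 20 = best_bin (choice i (nstates - S v) (V (S i)) k) /\
       m1 21 = best_next (choice i (nstates - S v) (V (S i)) k)) /\ t1 <= 10 + k * 56).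
  { destruct (best_choice_code_spec m i (nstates - S v)) as (m1 & t1 & E1 & H1 & T1); auto.
    all: try (apply Hl; lia); try lia. exists m1, t1. auto. }
  intros m1 t1 (E1 & (R19 & _ & _) & T1).
  pose proof (best_choice_code_frame _ _ _ E1) as Fk.
  assert (F32 : forall z, 32 <= z -> m1 z = m z) by (intros; apply Fk; unfold kept_by_best_choice; lia).
  assert (Hc1 : regs_ok m1) by (apply (regs_ok_frame m); auto; intros z Hz; apply Fk; unfold kept_by_best_choice; lia).
  pose proof Hc1 as (C1 & C3 & C4 & C5 & C6 & C7 & C8 & C9 & C10 & C11 & C12 & C13 & C14 & C31).
  rewrite <- (Fk 15) in R15 by (unfold kept_by_best_choice; lia). rewrite <- (Fk 16) in R16 by (unfold kept_by_best_choice; lia).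
  rewrite <- (Fk 25) in R25 by (unfold kept_by_best_choice; lia). rewrite <- (Fk 23) in R23 by (unfold kept_by_best_choice; lia).
  rewrite <- (Fk 24) in R24 by (unfold kept_by_best_choice; lia).
  run_atoms. apply exec_last_atom; cbn [atom_effect]; simp_upd.
  rewrite ?R24, ?R16, ?R19, ?R25, ?C9.
  assert (Hlt : i * nstates + (nstates - S v) < S i * nstates) by nia.
  split; [|lia].
  split. apply (regs_ok_frame m1); auto. intros z Hz. simp_upd. auto.
  split. apply (input_copied_frame m); auto. intros z Hz. unfold table_base in *. simp_upd. apply F32; lia.
  split. intros j Hj1 Hj2 s' Hs'. assert (j * nstates >= S i * nstates) by nia. simp_upd. rewrite F32 by lia. apply Hl; auto.
  simp_upd. split. auto. split. lia. split. lia. split. auto. split. auto. split. apply Fk; unfold kept_by_best_choice; lia.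
  split. intros s' Hs'. destruct (Nat.eq_dec s' (nstates - S v)).
    subst s'. simp_upd. rewrite (value_S I Nc i) by auto. reflexivity.
    simp_upd. rewrite F32 by lia. apply Hpart. lia.
  split. intros z Hz1 Hz2. simp_upd. auto.
  intros z Hz. simp_upd. apply F32. lia.
Qed.

Lemma fill_layer_spec m v :
  regs_ok m -> input_copied m -> layers_filled_from (S v) m -> v < n -> m 26 = S v ->
  exists m' t, exec fill_layer_code m m' t /\
   (regs_ok m' /\ input_copied m' /\ layers_filled_from v m' /\ m' 26 = v) /\ t <= 9 + nstates * (18 + k * 56).
Proof.
  intros Hc Hin Hl Hv R26.
  pose proof layout_bounds as (HD & HE & HED & HnD & HTV).
  pose proof nstates_pos as HS.
  pose proof Hc as (C1 & C3 & C4 & C5 & C6 & C7 & C8 & C9 & C10 & C11 & C12 & C13 & C14 & C31).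
  unfold fill_layer_code. run_atoms. rewrite ?R26, ?C9, ?C10, ?C11.
  match goal with |- exists _ _, exec (CSeq _ _) ?mm _ _ /\ _ => set (m0 := mm) end.
  set (Inv := fun u (m1 : memory) => u <= nstates /\ regs_ok m1 /\ input_copied m1 /\ layers_filled_from (S v) m1 /\ m1 15 = v /\
    m1 16 = nstates - u /\ m1 25 = u /\ m1 23 = table_base + S v * nstates /\ m1 24 = table_base + v * nstates /\ m1 26 = S v /\
    (forall s', s' < nstates - u -> m1 (table_base + v * nstates + s') = V v s')).
  assert (HI : Inv nstates m0).
  { unfold Inv, m0. simp_upd. split. lia. split. apply (regs_ok_frame m); auto. intros z Hz. simp_upd. auto.
    split. apply (input_copied_frame m); auto. intros z Hz. unfold table_base in *. simp_upd. auto.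
    split. intros j Hj1 Hj2 s' Hs'. simp_upd. apply Hl; auto.
    split. lia. split. lia. split. auto. split. nia. split. lia. split. auto.
    intros s' Hs'. lia. }
  assert (W1 : forall u m1, Inv u m1 -> (m1 25 = 0 <-> u = 0)).
  { intros u m1 (_ & _ & _ & _ & _ & _ & H & _). lia. }
  assert (W2 : forall u m1, Inv (S u) m1 -> exists m3 t3, exec fill_entry_code m1 m3 t3 /\ Inv u (upd m3 jump_reg 0) /\ t3 <= 15 + k * 56).
  { intros u m1 (Hu & Hc1 & Hin1 & Hl1 & R15 & R16 & R25 & R23 & R24 & R26' & Hp).
    destruct (fill_entry_spec m1 v u) as (m3 & t3 & E3 & (Hc3 & Hin3 & Hl3 & S15 & S16 & S25 & S23 & S24 & S26 & Hp3 & _ & _) & T3); auto; try lia.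
    exists m3, t3. split; auto. split; auto. unfold Inv. simp_upd. split. lia.
    split. apply (regs_ok_frame m3); auto. intros z Hz. simp_upd. auto.
    split. apply (input_copied_frame m3); auto. intros z Hz. unfold table_base in *. simp_upd. auto.
    split. intros j Hj1 Hj2 s' Hs'. simp_upd. apply Hl3; auto.
    split. auto. split. auto. split. auto. split. auto. split. auto. split. lia.
    intros s' Hs'. simp_upd. auto. }
  destruct (while_rule 25 fill_entry_code Inv _ W1 W2 nstates m0 HI) as (m2 & t2 & E2 & I2 & T2).
  apply exec_seq_cut with (R := fun m1 t1 => exec (CWhile 25 fill_entry_code) m0 m1 t1 /\ Inv 0 m1 /\ t1 <= 1 + nstates * (15 + k * 56 + 3)).
  { exists m2, t2. auto. }
  intros m1 t1 (E1 & (_ & Hc1 & Hin1 & Hl1 & _ & _ & _ & _ & _ & R26' & Hp) & T1).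
  apply exec_last_atom; cbn [atom_effect]; simp_upd. pose proof Hc1 as (D1 & D3 & D4 & D5 & D6 & D7 & D8 & D9 & _).
  rewrite R26', D9.
  split; [|nia].
  split. apply (regs_ok_frame m1); auto. intros z Hz. simp_upd. auto.
  split. apply (input_copied_frame m1); auto. intros z Hz. unfold table_base in *. simp_upd. auto.
  split. intros j Hj1 Hj2 s' Hs'. simp_upd. destruct (Nat.eq_dec j v).
    subst j. apply Hp. lia. apply Hl1; lia.
  lia.
Qed.

Lemma fill_table_spec m :
  regs_ok m -> input_copied m -> (forall z, table_base <= z -> m z = 0) ->
  exists m' t, exec fill_table_code m m' t /\ (regs_ok m' /\ input_copied m' /\ layers_filled_from 0 m') /\
     t <= 3 + n * (12 + nstates * (18 + k * 56)).
Proof.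
  intros Hc Hin Hz.
  pose proof layout_bounds as (HD & HE & HED & HnD & HTV).
  pose proof Hc as (C1 & C3 & C4 & C5 & C6 & C7 & C8 & C9 & C10 & C11 & C12 & C13 & C14 & C31).
  unfold fill_table_code. run_atoms. rewrite ?C4.
  match goal with |- exists _ _, exec _ ?mm _ _ /\ _ => set (m0 := mm) end.
  set (Inv := fun v (m1 : memory) => v <= n /\ regs_ok m1 /\ input_copied m1 /\ layers_filled_from v m1 /\ m1 26 = v).
  assert (HI : Inv n m0).
  { unfold Inv, m0. simp_upd. split. lia. split. apply (regs_ok_frame m); auto. intros z Hz'. simp_upd. auto.
    split. apply (input_copied_frame m); auto. intros z Hz'. unfold table_base in *. simp_upd. auto.
    split. intros j Hj1 Hj2 s' Hs'. assert (j = n) by lia. subst j. simp_upd. rewrite Hz by lia.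
    rewrite value_end. auto. lia. }
  assert (W1 : forall u m1, Inv u m1 -> (m1 26 = 0 <-> u = 0)).
  { intros u m1 (_ & _ & _ & _ & H). lia. }
  assert (W2 : forall u m1, Inv (S u) m1 -> exists m3 t3, exec fill_layer_code m1 m3 t3 /\ Inv u (upd m3 jump_reg 0) /\
     t3 <= 9 + nstates * (18 + k * 56)).
  { intros u m1 (Hu & Hc1 & Hin1 & Hl1 & R26).
    destruct (fill_layer_spec m1 u) as (m3 & t3 & E3 & (Hc3 & Hin3 & Hl3 & S26) & T3); auto; try lia.
    exists m3, t3. split; auto. split; auto. unfold Inv. simp_upd. split. lia.
    split. apply (regs_ok_frame m3); auto. intros z Hz'. simp_upd. auto.
    split. apply (input_copied_frame m3); auto. intros z Hz'. unfold table_base in *. simp_upd. auto.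
    split. intros j Hj1 Hj2 s' Hs'. simp_upd. apply Hl3; auto. auto. }
  destruct (while_rule 26 fill_layer_code Inv _ W1 W2 n m0 HI) as (m2 & t2 & E2 & (_ & I2) & T2).
  exists m2, t2. split; auto. split. tauto. nia.
Qed.

Definition recon_invariant v (m : memory) :=
  v <= n /\ regs_ok m /\ input_copied m /\ layers_filled_from 0 m /\ m 26 = v /\
  m 15 = n - v /\ m 16 = st (n - v) /\
  forall i, i < n - v -> m (choice_base + i) = dp_choice I Nc i.

Lemma recon_step_spec u m1 : recon_invariant (S u) m1 ->
  exists m3 t3, exec recon_step_code m1 m3 t3 /\ recon_invariant u (upd m3 jump_reg 0) /\
    t3 <= 19 + k * 56.
Proof.
  pose proof layout_bounds as (HD & HE & HED & HnD & HTV).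
  pose proof nstates_pos as HS.
  assert (Htb : table_base = input_base + input_size + 7) by reflexivity.
  assert (Hcb : choice_base = table_base + (n + 1) * nstates) by reflexivity.
  intros (Hu & Hc1 & Hin1 & Hl1 & R26 & R15 & R16 & Hout).
  set (i := n - S u) in *.
  assert (Hi : i < n) by lia.
  pose proof Hc1 as (D1 & D3 & D4 & D5 & D6 & D7 & D8 & D9 & D10 & D11 & D12 & D13 & D14 & D31).
  unfold recon_step_code. run_atom; simp_upd. run_atom; simp_upd. run_atom; simp_upd.
  rewrite ?R15, ?D10, ?D11.
  match goal with |- exists _ _, exec _ ?mm _ _ /\ _ => set (m2 := mm) end.
  assert (Fm2 : forall z, z <> 23 -> z <> 24 -> m2 z = m1 z) by (intros z Hz1 Hz2; unfold m2; simp_upd; auto).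
  assert (Hc2 : regs_ok m2) by (apply (regs_ok_frame m1); auto; intros z Hz; apply Fm2; lia).
  assert (Hin2 : input_copied m2) by (apply (input_copied_frame m1); auto; intros z Hz; apply Fm2; lia).
  assert (Hl2 : layer_filled (S i) m2).
  { intros s' Hs'. rewrite Fm2 by (unfold table_base in *; lia). apply Hl1; lia. }
  assert (Hrs : st i < nstates) by (apply dp_state_lt; lia).
  apply exec_seq_cut with (R := fun m3 t1 => exec best_choice_code m2 m3 t1 /\
    (m3 19 = best_value (choice i (st i) (V (S i)) k) /\ m3 20 = best_bin (choice i (st i) (V (S i)) k) /\
     m3 21 = best_next (choice i (st i) (V (S i)) k)) /\ t1 <= 10 + k * 56).
  { destruct (best_choice_code_spec m2 i (st i)) as (m3 & t3 & E3 & H3 & T3); auto.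
    all: try (unfold m2; simp_upd; rewrite ?R15, ?R16; try reflexivity; nia). exists m3, t3. auto. }
  intros m3 t1 (E1 & (_ & R20 & R21) & T1).
  pose proof (best_choice_code_frame _ _ _ E1) as Fk.
  assert (F32 : forall z, 32 <= z -> m3 z = m2 z) by (intros; apply Fk; unfold kept_by_best_choice; lia).
  assert (Hc3 : regs_ok m3) by (apply (regs_ok_frame m2); auto; intros z Hz; apply Fk; unfold kept_by_best_choice; lia).
  pose proof Hc3 as (E1' & E3' & E4' & E5' & E6' & E7' & E8' & E9' & E10' & E11' & E12' & E13' & E14' & E31').
  assert (S15 : m3 15 = i) by (rewrite Fk by (unfold kept_by_best_choice; lia); unfold m2; simp_upd; auto).
  assert (S26 : m3 26 = S u) by (rewrite Fk by (unfold kept_by_best_choice; lia); unfold m2; simp_upd; auto).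
  run_atoms. apply exec_last_atom; cbn [atom_effect]; simp_upd.
  rewrite ?E31', ?S15, ?R20, ?R21, ?E9', ?S26.
  split; [|lia]. unfold recon_invariant. simp_upd.
  split. lia.
  split. apply (regs_ok_frame m3); auto. intros z Hz. simp_upd. auto.
  assert (Hin3 : input_copied m3) by (apply (input_copied_frame m2); auto; intros z Hz; apply F32; lia).
  split. apply (input_copied_frame m3); auto. intros z Hz. simp_upd. auto.
  split. intros j Hj1 Hj2 s' Hs'. assert (j * nstates + s' < (n + 1) * nstates) by nia.
    simp_upd. rewrite F32 by lia. rewrite Fm2 by lia. apply Hl1; lia.
  split. lia. split. lia. split. replace (n - u) with (S i) by lia. reflexivity.
  intros i' Hi'. destruct (Nat.eq_dec i' i).
  - subst i'. simp_upd. reflexivity.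
  - simp_upd. rewrite F32 by lia. rewrite Fm2 by lia. apply Hout. lia.
Qed.

Lemma recon_spec m :
  regs_ok m -> input_copied m -> layers_filled_from 0 m ->
  exists m' t, exec recon_code m m' t /\
    (regs_ok m' /\ forall i, i < n -> m' (choice_base + i) = dp_choice I Nc i) /\
    t <= 5 + n * (22 + k * 56).
Proof.
  intros Hc Hin Hl.
  pose proof layout_bounds as (HD & HE & HED & HnD & HTV).
  pose proof Hc as (C1 & C3 & C4 & C5 & C6 & C7 & C8 & C9 & C10 & C11 & C12 & C13 & C14 & C31).
  unfold recon_code. run_atoms. rewrite ?C4.
  match goal with |- exists _ _, exec _ ?mm _ _ /\ _ => set (m0 := mm) end.
  assert (HI : recon_invariant n m0).
  { unfold recon_invariant, m0. simp_upd. split. lia. split. apply (regs_ok_frame m); auto. intros z Hz'. simp_upd. auto.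
    split. apply (input_copied_frame m); auto. intros z Hz'. unfold table_base in *. simp_upd. auto.
    split. intros j Hj1 Hj2 s' Hs'. unfold table_base in *. simp_upd. apply Hl; auto.
    split. auto. split. lia. split. rewrite Nat.sub_diag. reflexivity. intros; lia. }
  assert (W1 : forall u m1, recon_invariant u m1 -> (m1 26 = 0 <-> u = 0)).
  { intros u m1 (_ & _ & _ & _ & H & _). lia. }
  destruct (while_rule 26 recon_step_code recon_invariant _ W1 recon_step_spec n m0 HI)
    as (m2 & t2 & E2 & (_ & I2) & T2).
  exists m2, t2. split; auto. split. split. tauto. intros i Hi. apply I2. lia. nia.
Qed.

Lemma setup_spec m :
  m 1 = input_base -> input_copied m -> (forall z, table_base <= z -> m z = 0) ->
  exists m' t, exec (setup_code Nc) m m' t /\ (regs_ok m' /\ input_copied m' /\ forall z, table_base <= z -> m' z = 0) /\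
    t <= 40 + k * 5.
Proof.
  intros R1 Hin Hz.
  pose proof layout_bounds as (HD & HE & HED & HnD & HTV).
  assert (M0 : m input_base = k) by (rewrite <- (Nat.add_0_r input_base) at 1; rewrite Hin by lia; reflexivity).
  assert (M1 : m (input_base + 1) = n) by (rewrite Hin by lia; reflexivity).
  unfold setup_code. run_atoms. rewrite ?R1, ?M0, ?M1.
  match goal with |- exists _ _, exec (CSeq _ _) ?mm _ _ /\ _ => set (m0 := mm) end.
  set (Inv := fun v (m1 : memory) => v <= k /\ (forall z, z <> 2 -> z <> 10 -> z <> 22 -> m1 z = m0 z) /\
     m1 10 = B ^ (k - v) /\ m1 22 = v).
  assert (HI : Inv k m0).
  { unfold Inv, m0. simp_upd. rewrite Nat.sub_diag. split. lia. split. auto. auto. }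
  assert (W1 : forall u m1, Inv u m1 -> (m1 22 = 0 <-> u = 0)).
  { intros u m1 (_ & _ & _ & H). lia. }
  assert (W2 : forall u m1, Inv (S u) m1 -> exists m3 t3, exec (AMul 10 10 5 ;; ASub 22 22 9) m1 m3 t3 /\
      Inv u (upd m3 jump_reg 0) /\ t3 <= 2).
  { intros u m1 (Hu & Hf & R10 & R22).
    assert (R5 : m1 5 = B) by (rewrite Hf by lia; unfold m0; simp_upd; reflexivity).
    assert (R9 : m1 9 = 1) by (rewrite Hf by lia; unfold m0; simp_upd; reflexivity).
    run_atom; simp_upd. apply exec_last_atom; cbn [atom_effect]. unfold Inv. simp_upd. rewrite R10, R5, R9, R22.
    split; [|lia]. split. lia. split. intros z Hz1 Hz2 Hz3. simp_upd. auto.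
    split. replace (k - u) with (S (k - S u)) by lia. rewrite Nat.pow_succ_r'. lia. lia. }
  destruct (while_rule 22 _ Inv _ W1 W2 k m0 HI) as (m2 & t2 & E2 & (_ & Hf & R10 & _) & T2).
  apply exec_seq_cut with (R := fun m1 t1 => exec (CWhile 22 (AMul 10 10 5 ;; ASub 22 22 9)) m0 m1 t1 /\
     (forall z, z <> 2 -> z <> 10 -> z <> 22 -> m1 z = m0 z) /\ m1 10 = B ^ k /\ t1 <= 1 + k * 5).
  { exists m2, t2. rewrite Nat.sub_0_r in R10. split; [auto|]. split; [auto|]. split; [auto|lia]. }
  intros m1 t1 (E1 & Hf1 & R10' & T1).
  run_atoms. apply exec_last_atom; cbn [atom_effect]. simp_upd. rewrite !Hf1 by lia. unfold m0. simp_upd.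
  rewrite ?R1, ?M0, ?M1, R10'.
  split; [|lia].
  split. unfold regs_ok. simp_upd.
    repeat match goal with |- context [m1 ?z] => rewrite (Hf1 z) by lia end.
    unfold m0. simp_upd. rewrite ?R1, ?M0, ?M1.
    repeat split; auto; try lia; unfold table_base, input_size, choice_base, table_base, input_size, nstates; try reflexivity; try lia.
  split. intros x Hx. simp_upd. rewrite (Hf1 (input_base + x)) by lia. unfold m0. simp_upd. auto.
  intros z Hz'. unfold table_base, input_size in *. simp_upd. rewrite (Hf1 z) by lia. unfold m0. simp_upd. auto.
Qed.

Lemma output_spec m :
  regs_ok m -> (forall i, i < n -> m (choice_base + i) = dp_choice I Nc i) ->
  exists m' t, exec output_code m m' t /\ (forall i, i < n -> m' (input_size + i) = dp_choice I Nc i) /\ t <= 11 + n * 8.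
Proof.
  intros Hc Hob.
  pose proof layout_bounds as (HD & HE & HED & HnD & HTV).
  assert (HOB : input_base + input_size <= choice_base) by (unfold choice_base, table_base; lia).
  pose proof Hc as (C1 & C3 & C4 & C5 & C6 & C7 & C8 & C9 & C10 & C11 & C12 & C13 & C14 & C31).
  unfold output_code. run_atoms. rewrite ?C1, ?C4, ?C11, ?C31.
  match goal with |- exists _ _, exec _ ?mm _ _ /\ _ => set (m0 := mm) end.
  set (Inv := fun v (m1 : memory) => v <= n /\ m1 3 = v /\ m1 4 = choice_base + (n - v) /\ m1 0 = input_size + (n - v) /\
     m1 1 = 1 /\ (forall i, i < n - v -> m1 (input_size + i) = dp_choice I Nc i) /\
     (forall i, i < n -> m1 (choice_base + i) = dp_choice I Nc i)).
  assert (HI : Inv n m0).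
  { unfold Inv, m0. simp_upd. rewrite Nat.sub_diag. split. lia. split. lia. split. lia. split.
    unfold table_base. lia. split. auto. split. intros; lia. intros i Hi. simp_upd. auto. }
  assert (W1 : forall u m1, Inv u m1 -> (m1 3 = 0 <-> u = 0)).
  { intros u m1 (_ & H & _). lia. }
  assert (W2 : forall u m1, Inv (S u) m1 -> exists m3 t3,
      exec (ALoad 2 4 ;; AStore 0 2 ;; AAdd 4 4 1 ;; AAdd 0 0 1 ;; ASub 3 3 1) m1 m3 t3 /\
      Inv u (upd m3 jump_reg 0) /\ t3 <= 5).
  { intros u m1 (Hu & R3 & R4 & R0 & R1 & Ho & Hb).
    run_atoms. apply exec_last_atom; cbn [atom_effect]. unfold Inv. simp_upd. rewrite ?R0, ?R1, ?R3, ?R4.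
    split; [|lia]. split. lia. split. lia. split. lia. split. lia. split. auto.
    split. { intros i Hi. destruct (Nat.eq_dec i (n - S u)).
    - subst i. simp_upd. apply Hb. lia.
    - simp_upd. apply Ho. lia. }
    intros i Hi. simp_upd. auto. }
  destruct (while_rule 3 _ Inv _ W1 W2 n m0 HI) as (m2 & t2 & E2 & (_ & _ & _ & _ & _ & Ho & _) & T2).
  exists m2, t2. split; auto. split. intros i Hi. apply Ho. lia. lia.
Qed.

Definition relocate_invariant v (m : memory) :=
  v <= input_size - 7 /\ m 1 = input_base /\ m 3 = v /\ m 4 = 7 + (input_size - 7 - v) /\
  m 5 = input_base + 7 + (input_size - 7 - v) /\ m 6 = 1 /\
  (forall x, x < 7 + (input_size - 7 - v) -> m (input_base + x) = init_memory I x) /\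
  (forall x, 7 <= x < input_base -> m x = init_memory I x) /\
  (forall z, input_base + input_size + 7 <= z -> m z = 0).

Lemma relocate_step_spec u m1 : relocate_invariant (S u) m1 ->
  exists m3 t3,
    exec (ALoad 2 4 ;; AStore 5 2 ;; AAdd 4 4 6 ;; AAdd 5 5 6 ;; ASub 3 3 6) m1 m3 t3 /\
    relocate_invariant u (upd m3 jump_reg 0) /\ t3 <= 5.
Proof.
  pose proof layout_bounds as (HD & HE & HED & HnD & HTV).
  intros (Hu & R1 & R3 & R4 & R5 & R6 & Hcp & Hsrc & Hhi).
  run_atoms. apply exec_last_atom; cbn [atom_effect]. unfold relocate_invariant. simp_upd.
  rewrite ?R1, ?R3, ?R4, ?R5, ?R6.
  split; [|lia]. split. lia. split. auto. split. lia. split. lia. split. lia. split. auto.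
  split. { intros x Hx. destruct (Nat.eq_dec x (7 + (input_size - 7 - S u))).
    - subst x. simp_upd. apply Hsrc. lia.
    - simp_upd. apply Hcp. lia. }
  split. { intros x Hx. simp_upd. auto. }
  intros z Hz. simp_upd. auto.
Qed.

Lemma relocate_spec m :
  (forall x, m x = init_memory I x) ->
  exists m' t, exec relocate_code m m' t /\
    (m' 1 = input_base /\ input_copied m' /\ forall z, table_base <= z -> m' z = 0) /\
    t <= 42 + input_size * 8.
Proof.
  intros Hm.
  pose proof layout_bounds as (HD & HE & HED & HnD & HTV).
  assert (R0 : m 0 = k) by (rewrite Hm; reflexivity).
  assert (R1 : m 1 = n) by (rewrite Hm; reflexivity).
  assert (HDv : 2 * (2 * (2 * (2 * (2 * (2 * (n * k)))))) = input_base) by (unfold input_base; lia).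
  assert (Hdouble : forall x, x + x = 2 * x) by lia.
  unfold relocate_code.
  run_atom; simp_upd. rewrite R1, R0.
  do 6 (run_atom; simp_upd; rewrite ?Hdouble).
  rewrite HDv.
  run_atoms. rewrite ?R0, ?HDv.
  assert (Hn : input_base / (64 * k) = n).
  { unfold input_base. replace (64 * (n * k)) with (n * (64 * k)) by lia. apply Nat.div_mul.
    pose proof (bins_pos I Hvalid); lia. }
  assert (Hc0 : n * k + n * k + k + 2 - 7 = input_size - 7) by (unfold input_size; lia).
  rewrite Hn, Hc0.
  match goal with |- exists _ _, exec _ ?mm _ _ /\ _ => set (m0 := mm) end.
  assert (HI : relocate_invariant (input_size - 7) m0).
  { unfold relocate_invariant, m0. simp_upd. rewrite Nat.sub_diag.
    split. lia. split. auto. split. lia. split. lia. split. lia. split. auto.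
    split. intros x Hx.
    assert (x = 0 \/ x = 1 \/ x = 2 \/ x = 3 \/ x = 4 \/ x = 5 \/ x = 6) as Hx' by lia.
    destruct Hx' as [-> | [-> | [-> | [-> | [-> | [-> | ->]]]]]]; simp_upd; rewrite ?Hm; auto.
    split. intros x Hx. simp_upd. auto.
    intros z Hz. simp_upd. rewrite Hm. apply init_memory_high. unfold input_size in *. lia. }
  assert (W1 : forall u m1, relocate_invariant u m1 -> (m1 3 = 0 <-> u = 0)).
  { intros u m1 (_ & _ & H & _). lia. }
  destruct (while_rule 3 _ relocate_invariant _ W1 relocate_step_spec _ m0 HI)
    as (m2 & t2 & E2 & (_ & F1 & _ & _ & _ & _ & Hcp & _ & Hhi) & T2).
  exists m2, t2. split; auto. split. split. auto. split.
  - intros x Hx. apply Hcp. lia.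
  - intros z Hz. apply Hhi. unfold table_base in Hz. lia.
  - lia.
Qed.

Lemma main_code_spec :
  exists m' t, exec (main_code Nc) (init_memory I) m' t /\
    (forall i, i < n -> m' (output_base I + i) = dp_choice I Nc i) /\
    t <= 400 * n * k * nstates.
Proof.
  destruct (relocate_spec (init_memory I)) as (m1 & t1 & E1 & (A1 & A2 & A3) & T1); auto.
  destruct (setup_spec m1) as (m2 & t2 & E2 & (B1 & B2 & B3) & T2); auto.
  destruct (fill_table_spec m2) as (m3 & t3 & E3 & (C1 & C2 & C3) & T3); auto.
  destruct (recon_spec m3) as (m4 & t4 & E4 & (D1 & D2) & T4); auto.
  destruct (output_spec m4) as (m5 & t5 & E5 & F1 & T5); auto.
  exists m5, (t1 + (t2 + (t3 + (t4 + t5)))).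
  split; [unfold main_code; repeat (eapply exec_seq; eauto)|].
  split; [exact F1|].
  pose proof nstates_pos. pose proof (bins_pos I Hvalid). pose proof (items_pos I Hvalid).
  unfold input_size in T1. nia.
Qed.

End Verification.

(** * Running time and the main theorem *)

Local Open Scope R_scope.

Definition gap_program (Nc : nat) : program := compile (main_code Nc) 0 ++ [IHalt].

Lemma gap_program_run I Nc : valid_instance I ->
  exists t m, run (gap_program Nc) t (0%nat, init_memory I) = (cmd_size (main_code Nc), m) /\
    halted (gap_program Nc) (cmd_size (main_code Nc), m) /\
    (forall i, (i < gn I)%nat -> decode I m i = dp_assignment I Nc i) /\
    (t <= 400 * gn I * gk I * radix I Nc ^ gk I)%nat.
Proof.
  intros Hv. destruct (main_code_spec I Nc Hv) as (m & t & E & Hout & Ht).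
  exists t, m. split; [|split; [|split; [|exact Ht]]].
  - apply (compile_correct _ _ _ _ E (gap_program Nc) 0).
    intros i x Hx. unfold gap_program. rewrite Nat.add_0_l, nth_error_app1; auto.
    apply nth_error_Some. congruence.
  - unfold halted, step, gap_program.
    rewrite nth_error_app2; rewrite length_compile; [|lia].
    now rewrite Nat.sub_diag.
  - intros i Hi. unfold decode, dp_assignment. now rewrite Hout.
Qed.

Section AgreeBelow.
Variable I : gap_instance.
Variables a a' : assignment.
Hypothesis Hag : forall i, (i < gn I)%nat -> a i = a' i.

Lemma profit_eq_below : profit I a = profit I a'.
Proof. apply eq_sum_below. intros i Hi. now rewrite Hag. Qed.

Lemma feasible_relaxed_eq_below eps : feasible_relaxed eps I a' -> feasible_relaxed eps I a.
Proof.
  intros [Hok Hld]. split.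
  - intros i j Hi E. apply (Hok i j Hi). now rewrite <- Hag.
  - intros j Hj. replace (bin_load I a j) with (bin_load I a' j); [now apply Hld|].
    apply eq_sum_below. intros i Hi. unfold in_bin. now rewrite Hag.
Qed.

End AgreeBelow.

Lemma nat_in_unit_interval_above (x : R) : 0 <= x -> exists N : nat, x < INR N <= x + 1.
Proof.
  intros Hx. destruct (archimed x) as [H1 H2].
  assert (Hz : (0 <= up x)%Z) by (apply le_IZR; lra).
  exists (Z.to_nat (up x)). rewrite INR_IZR_INZ, Z2Nat.id by exact Hz. lra.
Qed.

Lemma INR_mul_pow_le (q : R) (k : nat) : 0 <= q < 1 -> INR k * q ^ k <= 1 / (1 - q).
Proof.
  intros [H0 H1]. induction k as [|k IHk].
  - simpl. assert (0 < 1 / (1 - q)) by (apply Rdiv_lt_0_compat; lra). lra.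
  - rewrite S_INR. simpl.
    assert (q ^ k <= 1) by (rewrite <- (pow1 k); apply pow_incr; lra).
    assert (0 <= q ^ k) by (apply pow_le; lra).
    assert (q * (INR k * q ^ k) <= q * (1 / (1 - q))) by (apply Rmult_le_compat_l; lra).
    assert (q * (1 / (1 - q)) + q <= 1 / (1 - q)).
    { apply Rmult_le_reg_r with (1 - q); [lra|].
      replace ((q * (1 / (1 - q)) + q) * (1 - q)) with (q + q * (1 - q)) by (field; lra).
      replace (1 / (1 - q) * (1 - q)) with 1 by (field; lra). nra. }
    nra.
Qed.

Lemma ratio_lt_1 (x y : R) : 0 <= x < y -> 0 <= x / y < 1.
Proof.
  intros Hxy. split; [apply Rmult_le_pos; [lra|apply Rlt_le, Rinv_0_lt_compat; lra]|].
  apply Rmult_lt_reg_r with y; [lra|]. unfold Rdiv. rewrite Rmult_assoc, Rinv_l; lra.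
Qed.

(* Since k q^k is bounded for q < 1, a factor k is absorbed into the constant. *)
Lemma running_time_bound (A rho : R) (n k b t : nat) :
  0 <= rho < A -> INR b <= INR n * rho -> (t <= 400 * n * k * b ^ k)%nat ->
  INR t <= 400 / (1 - rho / A) * A ^ k * INR n ^ (k + 1).
Proof.
  intros Hrho Hb Ht. set (q := rho / A).
  assert (HA : 0 < A) by lra.
  pose proof (ratio_lt_1 rho A Hrho) as Hq. fold q in Hq.
  assert (Hbk : INR b ^ k <= INR n ^ k * (q ^ k * A ^ k)).
  { rewrite <- Rpow_mult_distr, <- Rpow_mult_distr. apply pow_incr. split; [apply pos_INR|].
    replace (q * A) with rho by (unfold q; field; lra). exact Hb. }
  apply le_INR in Ht. rewrite !mult_INR, pow_INR in Ht.
  pose proof (INR_mul_pow_le q k Hq) as Hkq.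
  assert (0 <= INR n) by apply pos_INR. assert (0 <= INR k) by apply pos_INR.
  assert (0 <= INR n ^ k) by (apply pow_le; lra). assert (0 <= A ^ k) by (apply pow_le; lra).
  assert (0 <= q ^ k) by (apply pow_le; lra).
  assert (Hmain : INR t <= 400 * (INR k * q ^ k) * (A ^ k * INR n ^ (k + 1))).
  { rewrite pow_add, pow_1. replace (INR 400) with 400 in Ht by (simpl; lra).
    apply Rle_trans with (1 := Ht).
    replace (400 * (INR k * q ^ k) * (A ^ k * (INR n ^ k * INR n)))
      with (400 * INR n * INR k * (INR n ^ k * (q ^ k * A ^ k))) by ring.
    apply Rmult_le_compat_l; [|exact Hbk]. apply Rmult_le_pos; [apply Rmult_le_pos|]; lra. }
  replace (400 / (1 - q) * A ^ k * INR n ^ (k + 1))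
    with (400 * (1 / (1 - q)) * (A ^ k * INR n ^ (k + 1))) by (field; lra).
  apply Rle_trans with (1 := Hmain). apply Rmult_le_compat_r; [|lra].
  apply Rmult_le_pos; [lra|]. apply pow_le; lra.
Qed.

Lemma radix_le I Nc : (1 <= gn I)%nat -> (2 * radix I Nc <= gn I * Nat.max Nc 2)%nat.
Proof.
  intros Hn. unfold radix, rcap.
  pose proof (Nat.Div0.mul_div_le ((gn I - 1) * Nc) 2).
  assert ((gn I - 1) * Nc <= (gn I - 1) * Nat.max Nc 2)%nat by (apply Nat.mul_le_mono_l; lia).
  nia.
Qed.

Lemma half_max_lt (eps : R) (Nc : nat) :
  0 < eps -> INR Nc <= 2 / eps + 1 -> INR (Nat.max Nc 2) / 2 < (1 + eps) / eps.
Proof.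
  intros He HNc. assert (HA : (1 + eps) / eps = 1 + 1 / eps) by (field; lra).
  assert (0 < 1 / eps) by (apply Rdiv_lt_0_compat; lra).
  assert (2 / eps = 2 * (1 / eps)) by (field; lra).
  rewrite HA. destruct (Nat.max_spec Nc 2) as [[_ ->]|[_ ->]]; simpl; lra.
Qed.

Lemma relaxed_capacity (eps : R) (Nc ld C : nat) :
  0 < eps -> 2 / eps < INR Nc -> (ld * Nc <= (Nc + 2) * C)%nat -> INR ld <= (1 + eps) * INR C.
Proof.
  intros He HNc Hld. apply le_INR in Hld. rewrite !mult_INR, plus_INR in Hld. simpl in Hld.
  assert (2 / eps >= 0) by (unfold Rdiv; apply Rle_ge, Rmult_le_pos; [lra|apply Rlt_le, Rinv_0_lt_compat; lra]).
  assert (0 <= INR C) by apply pos_INR.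
  assert (2 < eps * INR Nc).
  { replace 2 with (eps * (2 / eps)) by (field; lra). apply Rmult_lt_compat_l; lra. }
  apply Rmult_le_reg_r with (INR Nc); [lra|]. nra.
Qed.

Lemma dp_assignment_relaxed eps I Nc :
  valid_instance I -> 0 < eps -> 2 / eps < INR Nc -> feasible_relaxed eps I (dp_assignment I Nc).
Proof.
  intros Hv He HNc. split; [apply dp_bins_ok|].
  intros j Hj. apply (relaxed_capacity eps Nc); auto. exact (dp_load I Nc Hv j Hj).
Qed.

Theorem mainTheorem13 :
  forall eps : R, 0 < eps ->
  exists (P : program) (c : R), 0 < c /\
    forall I : gap_instance, valid_instance I ->
      exists t : nat,
        halted P (run P t (0%nat, init_memory I)) /\
        INR t <= c * ((1 + eps) / eps) ^ gk I * INR (gn I) ^ (gk I + 1) /\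
        let a := decode I (snd (run P t (0%nat, init_memory I))) in
        feasible_relaxed eps I a /\
        forall b : assignment, feasible I b -> (profit I b <= profit I a)%nat.
Proof.
  intros eps He.
  assert (H2e : 0 <= 2 / eps) by (apply Rlt_le, Rdiv_lt_0_compat; lra).
  destruct (nat_in_unit_interval_above (2 / eps) H2e) as (Nc & HNc1 & HNc2).
  set (A := (1 + eps) / eps). set (rho := INR (Nat.max Nc 2) / 2).
  assert (Hrho : 0 <= rho < A).
  { split; [unfold rho; apply Rmult_le_pos; [apply pos_INR|lra]|now apply half_max_lt]. }
  exists (gap_program Nc), (400 / (1 - rho / A)). split.
  { pose proof (ratio_lt_1 rho A Hrho). apply Rdiv_lt_0_compat; lra. }
  intros I Hv. destruct (gap_program_run I Nc Hv) as (t & m & Hrun & Hhalt & Hdec & Ht).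
  exists t. rewrite Hrun. split; [exact Hhalt|]. split.
  - apply (running_time_bound A rho (gn I) (gk I) (radix I Nc) t Hrho); [|exact Ht].
    pose proof (le_INR _ _ (radix_le I Nc (items_pos I Hv))) as Hb.
    rewrite !mult_INR in Hb. unfold rho. simpl in Hb. lra.
  - simpl snd. split.
    + apply (feasible_relaxed_eq_below I _ _ Hdec). now apply dp_assignment_relaxed.
    + intros b Hb. rewrite (profit_eq_below I _ _ Hdec). now apply dp_profit_opt.
Qed.
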